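(* Let $X$ be a uniformly convex Banach space and $Y$ a Banach space with the Schur property (every weakly convergent sequence in $Y$ is norm convergent). Then the pair $(X,Y)$ has the sBPBp. In particular, the pair $(\ell_2,\ell_1)$ has the sBPBp.
   Context: All Banach spaces are over $\mathbb{K}=\mathbb{R}$ or $\mathbb{C}$. $S_X$ denotes the unit sphere of $X$ and $\mathcal{L}(X,Y)$ the space of bounded linear operators from $X$ to $Y$ with the operator norm. A pair of Banach spaces $(X,Y)$ has the strong Bishop–Phelps–Bollobás property (sBPBp) if for every $\varepsilon>0$ and every $T\in\mathcal{L}(X,Y)$ with $\|T\|=1$ there exists $\eta=\eta(\varepsilon,T)>0$ such that whenever $x_0\in S_X$ satisfies $\|T(x_0)\|>1-\eta$, there exists $x_1\in S_X$ with $\|T(x_1)\|=1$ and $\|x_1-x_0\|<\varepsilon$. *)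

From Stdlib Require Import Reals Lra Psatz.
Open Scope R_scope.

Inductive scalar_field := RealScalars | ComplexScalars.

(* C is modelled as R * R (real part, imaginary part). *)
Definition K (k : scalar_field) : Type :=
  match k with RealScalars => R | ComplexScalars => (R * R)%type end.

Definition Kadd {k} : K k -> K k -> K k :=
  match k with
  | RealScalars => fun a b : R => a + b
  | ComplexScalars => fun a b : R * R => (fst a + fst b, snd a + snd b)
  end.
Definition Kopp {k} : K k -> K k :=
  match k with
  | RealScalars => fun a : R => - a
  | ComplexScalars => fun a : R * R => (- fst a, - snd a)
  end.
Definition Kmul {k} : K k -> K k -> K k :=
  match k with
  | RealScalars => fun a b : R => a * b
  | ComplexScalars => fun a b : R * R =>
      (fst a * fst b - snd a * snd b, fst a * snd b + snd a * fst b)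
  end.
Definition K0 {k} : K k :=
  match k with RealScalars => (0 : R) | ComplexScalars => ((0, 0) : R * R) end.
Definition K1 {k} : K k :=
  match k with RealScalars => (1 : R) | ComplexScalars => ((1, 0) : R * R) end.
Definition Kreal {k} (r : R) : K k :=
  match k with RealScalars => r | ComplexScalars => ((r, 0) : R * R) end.
Definition Kabs {k} : K k -> R :=
  match k with
  | RealScalars => fun a : R => Rabs a
  | ComplexScalars => fun a : R * R => sqrt (fst a * fst a + snd a * snd a)
  end.

Lemma Kabs_pos k (a : K k) : 0 <= Kabs a.
Proof. destruct k; simpl. apply Rabs_pos. apply sqrt_pos. Qed.

Lemma Kabs_opp k (a : K k) : Kabs (Kopp a) = Kabs a.
Proof.
  destruct k; simpl. apply Rabs_Ropp.
  destruct a as [x y]; simpl. f_equal. ring.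
Qed.

Lemma Kabs_K0 k : Kabs (@K0 k) = 0.
Proof.
  destruct k; simpl. apply Rabs_R0.
  replace (0 * 0 + 0 * 0) with 0 by ring. apply sqrt_0.
Qed.

Lemma Kabs_mul k (a b : K k) : Kabs (Kmul a b) = Kabs a * Kabs b.
Proof.
  destruct k; simpl. apply Rabs_mult.
  destruct a as [x y], b as [u v]; simpl.
  rewrite <- sqrt_mult by nra. f_equal. ring.
Qed.

Lemma Kabs_triang k (a b : K k) : Kabs (Kadd a b) <= Kabs a + Kabs b.
Proof.
  destruct k; simpl. apply Rabs_triang.
  destruct a as [x y], b as [u v]; simpl.
  set (s := sqrt (x * x + y * y)). set (t := sqrt (u * u + v * v)).
  assert (Hs : s * s = x * x + y * y) by (apply sqrt_sqrt; nra).
  assert (Ht : t * t = u * u + v * v) by (apply sqrt_sqrt; nra).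
  assert (Hs0 : 0 <= s) by apply sqrt_pos.
  assert (Ht0 : 0 <= t) by apply sqrt_pos.
  assert (HL : (x * u + y * v) * (x * u + y * v) <= (s * t) * (s * t)).
  { replace ((s * t) * (s * t)) with ((s * s) * (t * t)) by ring.
    rewrite Hs, Ht.
    assert (0 <= (x * v - y * u) * (x * v - y * u)) by apply Rle_0_sqr. nra. }
  assert (HC : x * u + y * v <= s * t).
  { destruct (Rle_dec (x * u + y * v) 0) as [H|H]. nra.
    apply Rnot_le_lt in H.
    destruct (Rle_dec (x * u + y * v) (s * t)) as [H'|H']; auto.
    apply Rnot_le_lt in H'. exfalso.
    assert ((s * t) * (s * t) < (x * u + y * v) * (x * u + y * v)).
    { apply Rmult_le_0_lt_compat; nra. }
    lra. }
  apply Rsqr_incr_0_var; [| lra].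
  unfold Rsqr. rewrite sqrt_sqrt.
  - nra.
  - pose proof (Rle_0_sqr (x + u)); pose proof (Rle_0_sqr (y + v)); unfold Rsqr in *; lra.
Qed.

Record NormedData (k : scalar_field) := {
  carrier :> Type;
  vzero : carrier;
  vadd : carrier -> carrier -> carrier;
  vopp : carrier -> carrier;
  vscal : K k -> carrier -> carrier;
  norm : carrier -> R
}.
Arguments vzero {k X} : rename.
Arguments vadd {k X} : rename.
Arguments vopp {k X} : rename.
Arguments vscal {k X} : rename.
Arguments norm {k X} : rename.

Definition vsub {k} {X : NormedData k} (x y : X) : X := vadd x (vopp y).

Definition is_Banach {k} (X : NormedData k) : Prop :=
  (forall x y z : X, vadd x (vadd y z) = vadd (vadd x y) z) /\
  (forall x y : X, vadd x y = vadd y x) /\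
  (forall x : X, vadd x vzero = x) /\
  (forall x : X, vadd x (vopp x) = vzero) /\
  (forall (a b : K k) (x : X), vscal a (vscal b x) = vscal (Kmul a b) x) /\
  (forall x : X, vscal K1 x = x) /\
  (forall (a : K k) (x y : X), vscal a (vadd x y) = vadd (vscal a x) (vscal a y)) /\
  (forall (a b : K k) (x : X), vscal (Kadd a b) x = vadd (vscal a x) (vscal b x)) /\
  (forall x : X, norm x = 0 -> x = vzero) /\
  (forall (a : K k) (x : X), norm (vscal a x) = Kabs a * norm x) /\
  (forall x y : X, norm (vadd x y) <= norm x + norm y) /\
  (forall u : nat -> X,
     (forall eps, eps > 0 -> exists N, forall m n, (m >= N)%nat -> (n >= N)%nat ->
        norm (vsub (u m) (u n)) < eps) ->
     exists l : X, forall eps, eps > 0 -> exists N, forall n, (n >= N)%nat ->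
        norm (vsub (u n) l) < eps).

Definition in_sphere {k} {X : NormedData k} (x : X) : Prop := norm x = 1.

Definition is_linear {k} {X Y : NormedData k} (T : X -> Y) : Prop :=
  (forall x y : X, T (vadd x y) = vadd (T x) (T y)) /\
  (forall (a : K k) (x : X), T (vscal a x) = vscal a (T x)).

Definition is_bounded_linear {k} {X Y : NormedData k} (T : X -> Y) : Prop :=
  is_linear T /\ exists M, forall x : X, norm (T x) <= M * norm x.

Definition has_opnorm {k} {X Y : NormedData k} (T : X -> Y) (c : R) : Prop :=
  is_lub (fun r => exists x : X, norm x <= 1 /\ r = norm (T x)) c.

Definition is_bounded_functional {k} {X : NormedData k} (f : X -> K k) : Prop :=
  (forall x y : X, f (vadd x y) = Kadd (f x) (f y)) /\
  (forall (a : K k) (x : X), f (vscal a x) = Kmul a (f x)) /\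
  (exists M, forall x : X, Kabs (f x) <= M * norm x).

Definition weak_cv {k} {X : NormedData k} (u : nat -> X) (l : X) : Prop :=
  forall f : X -> K k, is_bounded_functional f ->
    Un_cv (fun n => Kabs (Kadd (f (u n)) (Kopp (f l)))) 0.

Definition schur_property {k} (Y : NormedData k) : Prop :=
  forall (u : nat -> Y) (l : Y), weak_cv u l -> Un_cv (fun n => norm (vsub (u n) l)) 0.

Definition uniformly_convex {k} (X : NormedData k) : Prop :=
  forall eps, eps > 0 -> exists delta, delta > 0 /\
    forall x y : X, in_sphere x -> in_sphere y -> norm (vsub x y) >= eps ->
      norm (vscal (Kreal (/ 2)) (vadd x y)) <= 1 - delta.

Definition sBPBp {k} (X Y : NormedData k) : Prop :=
  forall eps, eps > 0 ->
  forall T : X -> Y, is_bounded_linear T -> has_opnorm T 1 ->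
  exists eta, eta > 0 /\
    forall x0 : X, in_sphere x0 -> norm (T x0) > 1 - eta ->
      exists x1 : X, in_sphere x1 /\ norm (T x1) = 1 /\ norm (vsub x1 x0) < eps.

Definition partial_sums_bounded (a : nat -> R) : Prop :=
  exists M, forall N, sum_f_R0 a N <= M.

Definition l1_pred {k} (x : nat -> K k) : Prop :=
  partial_sums_bounded (fun n => Kabs (x n)).
Definition l2_pred {k} (x : nat -> K k) : Prop :=
  partial_sums_bounded (fun n => Kabs (x n) ^ 2).

Record lseq (k : scalar_field) (P : (nat -> K k) -> Prop) := {
  lval :> nat -> K k;
  lprop : P lval
}.
Arguments lval {k P}.
Arguments lprop {k P}.

(* sup of the partial sums (= the sum of the series, for nonnegative terms) *)
Definition sup_partial_sums (a : nat -> R) (H : partial_sums_bounded a) : R.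
Proof.
  refine (proj1_sig (completeness (fun r => exists N, r = sum_f_R0 a N) _ _)).
  - destruct H as [M HM]. exists M. intros r [N ->]. apply HM.
  - exists (sum_f_R0 a 0). exists 0%nat. reflexivity.
Defined.

Lemma pointwise_sum_bounded (a b c : nat -> R) :
  (forall n, c n <= a n + b n) ->
  partial_sums_bounded a -> partial_sums_bounded b -> partial_sums_bounded c.
Proof.
  intros Hc [Ma Ha] [Mb Hb]. exists (Ma + Mb). intro N.
  apply Rle_trans with (sum_f_R0 (fun n => a n + b n) N).
  - apply sum_Rle. intros; apply Hc.
  - rewrite plus_sum. specialize (Ha N); specialize (Hb N); lra.
Qed.

Lemma scaled_sum_bounded (a c : nat -> R) (m : R) :
  0 <= m -> (forall n, c n <= a n * m) ->
  partial_sums_bounded a -> partial_sums_bounded c.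
Proof.
  intros Hm Hc [Ma Ha]. exists (Ma * m). intro N.
  apply Rle_trans with (sum_f_R0 (fun n => a n * m) N).
  - apply sum_Rle. intros; apply Hc.
  - rewrite <- scal_sum. rewrite Rmult_comm. apply Rmult_le_compat_r; auto.
Qed.

Lemma zero_sum_bounded (c : nat -> R) :
  (forall n, c n = 0) -> partial_sums_bounded c.
Proof.
  intro Hc. exists 0. intro N. induction N; simpl; rewrite Hc; lra.
Qed.

Definition l1_zero k : lseq k l1_pred.
Proof.
  refine {| lval := fun _ => K0 |}.
  apply zero_sum_bounded. intro; apply Kabs_K0.
Defined.
Definition l1_add k (x y : lseq k l1_pred) : lseq k l1_pred.
Proof.
  refine {| lval := fun n => Kadd (x n) (y n) |}.
  apply (pointwise_sum_bounded _ _ _ (fun n => Kabs_triang k (x n) (y n)))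
    ; [apply (lprop x) | apply (lprop y)].
Defined.
Definition l1_opp k (x : lseq k l1_pred) : lseq k l1_pred.
Proof.
  refine {| lval := fun n => Kopp (x n) |}.
  apply (scaled_sum_bounded (fun n => Kabs (x n)) _ 1); [lra | | apply (lprop x)].
  intro n. simpl. rewrite Kabs_opp. lra.
Defined.
Definition l1_scal k (a : K k) (x : lseq k l1_pred) : lseq k l1_pred.
Proof.
  refine {| lval := fun n => Kmul a (x n) |}.
  apply (scaled_sum_bounded (fun n => Kabs (x n)) _ (Kabs a)); [apply Kabs_pos | | apply (lprop x)].
  intro n. simpl. rewrite Kabs_mul. lra.
Defined.
Definition l1_norm k (x : lseq k l1_pred) : R :=
  sup_partial_sums _ (lprop x).

Definition ell1 (k : scalar_field) : NormedData k :=
  {| carrier := lseq k l1_pred; vzero := l1_zero k; vadd := l1_add k;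
     vopp := l1_opp k; vscal := l1_scal k; norm := l1_norm k |}.

Lemma sq_triang (u v w : R) : 0 <= u -> 0 <= v -> 0 <= w -> w <= u + v ->
  w ^ 2 <= 2 * u ^ 2 + 2 * v ^ 2.
Proof.
  intros. simpl. rewrite !Rmult_1_r.
  assert (w * w <= (u + v) * (u + v)) by (apply Rmult_le_compat; lra).
  assert (0 <= (u - v) * (u - v)) by apply Rle_0_sqr. nra.
Qed.

Definition l2_zero k : lseq k l2_pred.
Proof.
  refine {| lval := fun _ => K0 |}.
  apply zero_sum_bounded. intro; simpl. rewrite Kabs_K0. ring.
Defined.
Definition l2_add k (x y : lseq k l2_pred) : lseq k l2_pred.
Proof.
  refine {| lval := fun n => Kadd (x n) (y n) |}.
  apply (pointwise_sum_bounded (fun n => 2 * Kabs (x n) ^ 2) (fun n => 2 * Kabs (y n) ^ 2)).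
  - intro n. apply sq_triang; try apply Kabs_pos. apply Kabs_triang.
  - apply (scaled_sum_bounded (fun n => Kabs (x n) ^ 2) _ 2); [lra | | apply (lprop x)]. intro; lra.
  - apply (scaled_sum_bounded (fun n => Kabs (y n) ^ 2) _ 2); [lra | | apply (lprop y)]. intro; lra.
Defined.
Definition l2_opp k (x : lseq k l2_pred) : lseq k l2_pred.
Proof.
  refine {| lval := fun n => Kopp (x n) |}.
  apply (scaled_sum_bounded (fun n => Kabs (x n) ^ 2) _ 1); [lra | | apply (lprop x)].
  intro n. simpl. rewrite Kabs_opp. lra.
Defined.
Definition l2_scal k (a : K k) (x : lseq k l2_pred) : lseq k l2_pred.
Proof.
  refine {| lval := fun n => Kmul a (x n) |}.
  apply (scaled_sum_bounded (fun n => Kabs (x n) ^ 2) _ (Kabs a ^ 2)); [apply pow2_ge_0 | | apply (lprop x)].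
  intro n. simpl. rewrite Kabs_mul. lra.
Defined.
Definition l2_norm k (x : lseq k l2_pred) : R :=
  sqrt (sup_partial_sums _ (lprop x)).

Definition ell2 (k : scalar_field) : NormedData k :=
  {| carrier := lseq k l2_pred; vzero := l2_zero k; vadd := l2_add k;
     vopp := l2_opp k; vscal := l2_scal k; norm := l2_norm k |}.

(* Suppose the property fails for [T]: there are [x n] on the sphere with [norm (T (x n)) -> 1]
   staying [eps] away from every point where [T] attains its norm.  By uniform convexity a
   subsequence converges weakly to some [p]; then [T (x n)] converges weakly, hence by the Schur
   property in norm, to [T p], so [norm (T p) = 1] and [p] is on the sphere.  Since
   [norm (T (midpoint (x n) p)) -> 1], uniform convexity forces [x n -> p], a contradiction.

   Weak compactness is proved without duality: pass to a subsequence on which the minimal norm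
   of the closed convex hulls of tails can no longer be increased by thinning out; the
   minimal-norm point of these hulls is then the weak limit.  For [l2] uniform convexity is the
   parallelogram law, and the Schur property of [l1] is the gliding hump argument. *)

From Stdlib Require Import Reals Lra Psatz Lia.
From Stdlib Require Import Classical ClassicalEpsilon FunctionalExtensionality ProofIrrelevance.
Open Scope R_scope.

Lemma Rabs_le_inv (a b : R) : Rabs a <= b -> - b <= a <= b.
Proof.
  intro H. pose proof (Rle_abs a). pose proof (Rle_abs (- a)).
  rewrite Rabs_Ropp in *. lra.
Qed.

Lemma archimed_inv (e : R) : e > 0 -> exists N : nat, / (INR N + 1) < e.
Proof.
  intro He. destruct (archimed_cor1 e He) as (N & HN & HN0). exists N.
  apply Rle_lt_trans with (/ INR N); auto.
  apply Rinv_le_contravar; [apply lt_0_INR; lia | lra].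
Qed.

Lemma inv_INR_succ_pos (n : nat) : 0 < / (INR n + 1).
Proof. apply Rinv_0_lt_compat. pose proof (pos_INR n). lra. Qed.

Lemma inv_INR_succ_le (n m : nat) : (n <= m)%nat -> / (INR m + 1) <= / (INR n + 1).
Proof.
  intro H. apply Rinv_le_contravar; [pose proof (pos_INR n); lra|].
  apply le_INR in H. lra.
Qed.

Lemma sup_approx (A : R -> Prop) (B : R) : (exists x, A x) -> (forall x, A x -> x <= B) ->
  exists s, (forall x, A x -> x <= s) /\ s <= B /\ (forall e, e > 0 -> exists x, A x /\ s - e < x).
Proof.
  intros Hne Hb. destruct (completeness A) as [s [Hub Hl]]; [exists B; auto | auto |].
  exists s. split; [exact Hub | split].
  - apply Hl. intros x Hx; auto.
  - intros e He. apply NNPP. intro Hn. assert (s <= s - e); [|lra].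
    apply Hl. intros y Hy. apply Rnot_lt_le. intro Hlt. apply Hn. exists y; auto.
Qed.

Lemma inf_approx (A : R -> Prop) : (exists x, A x) -> (forall x, A x -> 0 <= x) ->
  exists d, (forall x, A x -> d <= x) /\ (forall e, e > 0 -> exists x, A x /\ x < d + e).
Proof.
  intros [x0 Hx0] Hpos.
  destruct (sup_approx (fun y => A (- y)) 0) as (m & Hub & _ & Happ).
  { exists (- x0). rewrite Ropp_involutive. auto. }
  { intros y Hy. apply Hpos in Hy. lra. }
  exists (- m). split.
  - intros x Hx. assert (- x <= m) by (apply Hub; rewrite Ropp_involutive; auto). lra.
  - intros e He. destruct (Happ e He) as (y & Hy & Hlt). exists (- y). split; auto. lra.
Qed.

Definition infinite_set (I : nat -> Prop) : Prop := forall N, exists n, (n >= N)%nat /\ I n.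

Lemma infinite_set_or (P Q : nat -> Prop) :
  infinite_set (fun n => P n \/ Q n) -> infinite_set P \/ infinite_set Q.
Proof.
  intro H. apply NNPP. intro Hn. apply not_or_and in Hn. destruct Hn as [H1 H2].
  apply not_all_ex_not in H1. apply not_all_ex_not in H2.
  destruct H1 as [N1 H1], H2 as [N2 H2].
  destruct (H (max N1 N2)) as (n & Hn & [Hp|Hq]).
  - apply H1. exists n. split; auto. lia.
  - apply H2. exists n. split; auto. lia.
Qed.

Lemma not_Un_cv_0 (a : nat -> R) :
  ~ Un_cv a 0 -> exists eps, eps > 0 /\ infinite_set (fun n => eps <= Rabs (a n)).
Proof.
  intro H. apply NNPP. intro H'. apply H. intros eps He.
  apply NNPP. intro H2. apply H'. exists eps. split; auto. intro N.
  apply NNPP. intro H3. apply H2. exists N. intros n Hn. unfold R_dist. rewrite Rminus_0_r.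
  apply Rnot_le_lt. intro Hle. apply H3. exists n; auto.
Qed.

Lemma Un_cv_0_abs (a : nat -> R) :
  Un_cv a 0 -> forall eps, eps > 0 -> exists N, forall n, (n >= N)%nat -> Rabs (a n) < eps.
Proof.
  intros H eps He. destruct (H eps He) as [N HN]. exists N. intros n Hn.
  specialize (HN n Hn). unfold R_dist in HN. rewrite Rminus_0_r in HN. auto.
Qed.

Lemma Un_cv_le (u : nat -> R) l B N0 :
  Un_cv u l -> (forall n, (n >= N0)%nat -> u n <= B) -> l <= B.
Proof.
  intros Hu HB. apply Rnot_lt_le. intro Hlt. destruct (Hu (l - B)) as [N HN]; [lra|].
  specialize (HN (max N N0) ltac:(lia)). specialize (HB (max N N0) ltac:(lia)).
  unfold R_dist in HN. apply Rabs_def2 in HN. lra.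
Qed.

Ltac K_ring :=
  match goal with |- @eq (K ?k) _ _ => destruct k end; simpl;
  [ring | apply injective_projections; simpl; ring].

Definition Kre {k} : K k -> R :=
  match k with RealScalars => fun a : R => a | ComplexScalars => fun a : R * R => fst a end.
Definition Kim {k} : K k -> R :=
  match k with RealScalars => fun _ : R => 0 | ComplexScalars => fun a : R * R => snd a end.
Definition Kof_re_im {k} (x y : R) : K k :=
  match k with RealScalars => x | ComplexScalars => ((x, y) : R * R) end.

Lemma Kreal_mul k (a b : R) : Kmul (Kreal a) (Kreal b) = (Kreal (a * b) : K k).
Proof. K_ring. Qed.
Lemma Kreal_add k (a b : R) : Kadd (Kreal a) (Kreal b) = (Kreal (a + b) : K k).
Proof. K_ring. Qed.
Lemma Kreal_1 k : (Kreal 1 : K k) = K1.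
Proof. destruct k; reflexivity. Qed.
Lemma Kadd_opp k (a : K k) : Kadd a (Kopp a) = K0.
Proof. K_ring. Qed.
Lemma Kadd_opp0 k (a : K k) : Kadd a (Kopp K0) = a.
Proof. K_ring. Qed.
Lemma Kmul_opp1 k (a : K k) : Kmul (Kopp K1) a = Kopp a.
Proof. K_ring. Qed.

Lemma Kabs_Kreal k (a : R) : Kabs (Kreal a : K k) = Rabs a.
Proof.
  destruct k; simpl; [reflexivity|].
  replace (a * a + 0 * 0) with (Rsqr a) by (unfold Rsqr; ring). apply sqrt_Rsqr_abs.
Qed.
Lemma Kabs_K1 k : Kabs (@K1 k) = 1.
Proof. rewrite <- Kreal_1, Kabs_Kreal. apply Rabs_R1. Qed.
Lemma Kabs_eq0 k (a : K k) : Kabs a = 0 -> a = K0.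
Proof.
  destruct k; simpl; intro H.
  - destruct (Req_dec a 0) as [|Ha]; auto. exfalso. exact (Rabs_no_R0 a Ha H).
  - destruct a as [x y]; simpl in *. apply sqrt_eq_0 in H; [|nra]. f_equal; nra.
Qed.

Lemma Kre_add k (a b : K k) : Kre (Kadd a b) = Kre a + Kre b.
Proof. destruct k; simpl; ring. Qed.
Lemma Kim_add k (a b : K k) : Kim (Kadd a b) = Kim a + Kim b.
Proof. destruct k; simpl; ring. Qed.
Lemma Kre_opp k (a : K k) : Kre (Kopp a) = - Kre a.
Proof. destruct k; simpl; ring. Qed.
Lemma Kim_opp k (a : K k) : Kim (Kopp a) = - Kim a.
Proof. destruct k; simpl; ring. Qed.

Lemma Rabs_Kre_le k (a : K k) : Rabs (Kre a) <= Kabs a.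
Proof.
  destruct k; simpl; [lra|]. destruct a as [x y]; simpl.
  rewrite <- sqrt_Rsqr_abs. apply sqrt_le_1_alt. unfold Rsqr. nra.
Qed.
Lemma Rabs_Kim_le k (a : K k) : Rabs (Kim a) <= Kabs a.
Proof.
  destruct k; simpl; [rewrite Rabs_R0; apply Rabs_pos|]. destruct a as [x y]; simpl.
  rewrite <- sqrt_Rsqr_abs. apply sqrt_le_1_alt. unfold Rsqr. nra.
Qed.
Lemma Kabs_le_re_im k (a : K k) : Kabs a <= Rabs (Kre a) + Rabs (Kim a).
Proof.
  destruct k; simpl; [rewrite Rabs_R0; lra|]. destruct a as [x y]; simpl.
  pose proof (Rabs_pos x); pose proof (Rabs_pos y).
  apply Rsqr_incr_0_var; [|lra].
  unfold Rsqr. rewrite sqrt_sqrt by nra.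
  assert (Rabs x * Rabs x = x * x) by (rewrite <- Rabs_mult; apply Rabs_right; nra).
  assert (Rabs y * Rabs y = y * y) by (rewrite <- Rabs_mult; apply Rabs_right; nra).
  nra.
Qed.
Lemma Kabs_sqr k (a : K k) : Kabs a ^ 2 = Kre a ^ 2 + Kim a ^ 2.
Proof.
  destruct k; unfold Kabs, Kre, Kim; [rewrite pow2_abs; ring|].
  destruct a as [x y]; unfold fst, snd. rewrite pow2_sqrt by nra. ring.
Qed.

Lemma Kabs_sub_sym k (a b : K k) : Kabs (Kadd a (Kopp b)) = Kabs (Kadd b (Kopp a)).
Proof. rewrite <- Kabs_opp. f_equal. K_ring. Qed.
Lemma Kabs_sub_triang k (a b c : K k) :
  Kabs (Kadd a (Kopp c)) <= Kabs (Kadd a (Kopp b)) + Kabs (Kadd b (Kopp c)).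
Proof.
  replace (Kadd a (Kopp c)) with (Kadd (Kadd a (Kopp b)) (Kadd b (Kopp c))) by K_ring.
  apply Kabs_triang.
Qed.
Lemma Kabs_sub_eq0 k (a b : K k) : Kabs (Kadd a (Kopp b)) = 0 -> a = b.
Proof.
  intro H. apply Kabs_eq0 in H. destruct k; simpl in *; [lra|].
  destruct a, b; simpl in *. injection H; intros; f_equal; lra.
Qed.

Lemma Kre_mul_add k (s a b : K k) : Kre (Kmul s (Kadd a b)) = Kre (Kmul s a) + Kre (Kmul s b).
Proof. destruct k; simpl; ring. Qed.
Lemma Kre_mul_opp k (s a : K k) : Kre (Kmul s (Kopp a)) = - Kre (Kmul s a).
Proof. destruct k; simpl; ring. Qed.
Lemma Kre_mul_Kreal k (s : K k) t a : Kre (Kmul s (Kmul (Kreal t) a)) = t * Kre (Kmul s a).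
Proof. destruct k; simpl; ring. Qed.
Lemma Kre_mul_le k (s a : K k) : Kabs s <= 1 -> Kre (Kmul s a) <= Kabs a.
Proof.
  intro Hs. pose proof (Rabs_Kre_le k (Kmul s a)). rewrite Kabs_mul in H.
  pose proof (Rle_abs (Kre (Kmul s a))). pose proof (Kabs_pos k a). nra.
Qed.

(* Over the reals the last two rotations are [0] and those cases are vacuous. *)
Lemma Kabs_le_rotated_re k (a : K k) :
  (Kabs a <= 2 * Kre (Kmul K1 a) \/ Kabs a <= 2 * Kre (Kmul (Kopp K1) a)) \/
  (Kabs a <= 2 * Kre (Kmul (Kof_re_im 0 (-1)) a) \/ Kabs a <= 2 * Kre (Kmul (Kof_re_im 0 1) a)).
Proof.
  pose proof (Kabs_le_re_im k a).
  assert (Kre (Kmul K1 a) = Kre a /\ Kre (Kmul (Kopp K1) a) = - Kre a /\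
          Kre (Kmul (Kof_re_im 0 (-1)) a) = Kim a /\ Kre (Kmul (Kof_re_im 0 1) a) = - Kim a)
    as (-> & -> & -> & ->) by (destruct k; simpl; repeat split; ring).
  unfold Rabs in H. destruct (Rcase_abs (Kre a)), (Rcase_abs (Kim a)); lra.
Qed.

Lemma infinite_large_rotated_re k (a : nat -> K k) eps :
  infinite_set (fun j => eps <= Kabs (a j)) ->
  exists s, Kabs s <= 1 /\ infinite_set (fun j => eps <= 2 * Kre (Kmul s (a j))).
Proof.
  intro Ha.
  assert (Hunit : forall s : K k, Kabs s = 1 \/ s = K0 -> Kabs s <= 1).
  { intros s [-> | ->]; [lra | rewrite Kabs_K0; lra]. }
  assert (Hi : forall y : R, Kabs (@Kof_re_im k 0 y) = Rabs y \/ @Kof_re_im k 0 y = K0).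
  { intro y. destruct k; simpl; [right; reflexivity | left].
    rewrite <- sqrt_Rsqr_abs. unfold Rsqr. f_equal. ring. }
  assert (Hall : infinite_set (fun j => (eps <= 2 * Kre (Kmul K1 (a j)) \/
      eps <= 2 * Kre (Kmul (Kopp K1) (a j))) \/ (eps <= 2 * Kre (Kmul (Kof_re_im 0 (-1)) (a j)) \/
      eps <= 2 * Kre (Kmul (Kof_re_im 0 1) (a j))))).
  { intro N. destruct (Ha N) as (j & Hj & Hje). exists j. split; auto.
    pose proof (Kabs_le_rotated_re k (a j)). lra. }
  destruct (infinite_set_or _ _ Hall) as [H | H]; destruct (infinite_set_or _ _ H) as [H' | H'];
    eexists; (split; [apply Hunit | exact H']).
  - left. apply Kabs_K1.
  - left. rewrite Kabs_opp. apply Kabs_K1.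
  - destruct (Hi (-1)) as [-> | ->]; [left; rewrite Rabs_left; lra | right; reflexivity].
  - destruct (Hi 1) as [-> | ->]; [left; apply Rabs_R1 | right; reflexivity].
Qed.

Definition Kcauchy {k} (c : nat -> K k) : Prop :=
  forall eps, eps > 0 -> exists N, forall m n, (m >= N)%nat -> (n >= N)%nat ->
    Kabs (Kadd (c m) (Kopp (c n))) < eps.
Definition Kcv {k} (c : nat -> K k) (l : K k) : Prop :=
  forall eps, eps > 0 -> exists N, forall m, (m >= N)%nat -> Kabs (Kadd (c m) (Kopp l)) < eps.

Lemma Kof_re_im_sub k (a : K k) x y : Kre (Kadd a (Kopp (Kof_re_im x y))) = Kre a - x /\
  Rabs (Kim (Kadd a (Kopp (Kof_re_im x y)))) <= Rabs (Kim a - y).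
Proof.
  destruct k; simpl; split; try ring.
  - rewrite Rabs_R0. apply Rabs_pos.
  - replace (snd a + - y) with (snd a - y) by ring. lra.
Qed.

Lemma K_complete k (c : nat -> K k) : Kcauchy c -> exists l, Kcv c l.
Proof.
  intro Hc.
  assert (Hpart : forall part : K k -> R, (forall a b, part (Kadd a (Kopp b)) = part a - part b) ->
            (forall a, Rabs (part a) <= Kabs a) -> Cauchy_crit (fun m => part (c m))).
  { intros part Hsub Hle eps He. destruct (Hc eps He) as [N HN]. exists N. intros n m Hn Hm.
    unfold R_dist. rewrite <- Hsub. eapply Rle_lt_trans; [apply Hle | auto]. }
  destruct (R_complete _ (Hpart Kre ltac:(intros; rewrite Kre_add, Kre_opp; ring) (Rabs_Kre_le k)))
    as [lr Hr].
  destruct (R_complete _ (Hpart Kim ltac:(intros; rewrite Kim_add, Kim_opp; ring) (Rabs_Kim_le k)))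
    as [li Hi].
  exists (Kof_re_im lr li). intros eps He.
  destruct (Hr (eps / 2)) as [N1 H1]; [lra|]. destruct (Hi (eps / 2)) as [N2 H2]; [lra|].
  exists (max N1 N2). intros m Hm. specialize (H1 m ltac:(lia)). specialize (H2 m ltac:(lia)).
  unfold R_dist in H1, H2. pose proof (Kabs_le_re_im _ (Kadd (c m) (Kopp (Kof_re_im lr li)))).
  destruct (Kof_re_im_sub _ (c m) lr li) as [E1 E2]. rewrite E1 in H. lra.
Qed.

Lemma Kcv_abs_sub k (c : nat -> K k) (l w : K k) :
  Kcv c l -> Un_cv (fun m => Kabs (Kadd (c m) (Kopp w))) (Kabs (Kadd l (Kopp w))).
Proof.
  intros Hc eps He. destruct (Hc eps He) as [N HN]. exists N. intros n Hn. unfold R_dist.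
  pose proof (HN n Hn).
  pose proof (Kabs_sub_triang _ (c n) l w). pose proof (Kabs_sub_triang _ l (c n) w).
  rewrite (Kabs_sub_sym _ l (c n)) in H1. apply Rabs_def1; lra.
Qed.
Lemma Kcv_unique k (s : nat -> K k) l1 l2 : Kcv s l1 -> Kcv s l2 -> l1 = l2.
Proof.
  intros H1 H2. apply Kabs_sub_eq0. apply Rle_antisym; [|apply Kabs_pos].
  apply le_epsilon. intros e He. rewrite Rplus_0_l.
  destruct (H1 (e / 2)) as [N1 HN1]; [lra|]. destruct (H2 (e / 2)) as [N2 HN2]; [lra|].
  specialize (HN1 (max N1 N2) ltac:(lia)). specialize (HN2 (max N1 N2) ltac:(lia)).
  pose proof (Kabs_sub_triang _ l1 (s (max N1 N2)) l2).
  rewrite (Kabs_sub_sym _ l1 (s (max N1 N2))) in H. lra.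
Qed.
Lemma Kcv_add k (c d : nat -> K k) l1 l2 :
  Kcv c l1 -> Kcv d l2 -> Kcv (fun m => Kadd (c m) (d m)) (Kadd l1 l2).
Proof.
  intros H1 H2 eps He. destruct (H1 (eps / 2)) as [N1 HN1]; [lra|].
  destruct (H2 (eps / 2)) as [N2 HN2]; [lra|]. exists (max N1 N2). intros m Hm.
  replace (Kadd (Kadd (c m) (d m)) (Kopp (Kadd l1 l2)))
    with (Kadd (Kadd (c m) (Kopp l1)) (Kadd (d m) (Kopp l2))) by K_ring.
  pose proof (Kabs_triang _ (Kadd (c m) (Kopp l1)) (Kadd (d m) (Kopp l2))).
  specialize (HN1 m ltac:(lia)). specialize (HN2 m ltac:(lia)). lra.
Qed.
Lemma Kcv_mul k a (c : nat -> K k) l : Kcv c l -> Kcv (fun m => Kmul a (c m)) (Kmul a l).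
Proof.
  intros H eps He. pose proof (Kabs_pos _ a).
  destruct (H (eps / (Kabs a + 1))) as [N HN]; [apply Rdiv_lt_0_compat; lra|].
  exists N. intros m Hm. specialize (HN m Hm).
  replace (Kadd (Kmul a (c m)) (Kopp (Kmul a l))) with (Kmul a (Kadd (c m) (Kopp l))) by K_ring.
  rewrite Kabs_mul. pose proof (Kabs_pos _ (Kadd (c m) (Kopp l))).
  apply Rle_lt_trans with (Kabs a * (eps / (Kabs a + 1))); [apply Rmult_le_compat_l; lra|].
  apply Rmult_lt_reg_l with (Kabs a + 1); [lra|]. field_simplify; lra.
Qed.
Lemma Kcv_ext k (s t : nat -> K k) l : (forall m, s m = t m) -> Kcv s l -> Kcv t l.
Proof.
  intros E H eps He. destruct (H eps He) as [N HN]. exists N. intros m Hm. rewrite <- E. auto.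
Qed.
Lemma Kcv_abs_le k (s : nat -> K k) l B : Kcv s l -> (forall m, Kabs (s m) <= B) -> Kabs l <= B.
Proof.
  intros H HB. apply le_epsilon. intros e He. destruct (H e He) as [N HN].
  specialize (HN N (le_n N)). specialize (HB N).
  pose proof (Kabs_sub_triang _ l (s N) K0). rewrite !Kadd_opp0, Kabs_sub_sym in H0. lra.
Qed.
Lemma Kcv_re_ge k (s : nat -> K k) l c M0 : Kcv s l ->
  (forall M, (M >= M0)%nat -> c <= Kre (s M)) -> c <= Kre l.
Proof.
  intros H Hc. apply le_epsilon. intros e He. destruct (H e He) as [N HN].
  specialize (HN (max N M0) ltac:(lia)). specialize (Hc (max N M0) ltac:(lia)).
  pose proof (Rabs_Kre_le _ (Kadd (s (max N M0)) (Kopp l))).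
  rewrite Kre_add, Kre_opp in H0. apply Rabs_le_inv in H0. lra.
Qed.

Definition Kphase {k} : K k -> K k :=
  match k return K k -> K k with
  | RealScalars => fun a : R => if Rle_dec 0 a then 1 else -1
  | ComplexScalars => fun a : R * R =>
      let r := sqrt (fst a * fst a + snd a * snd a) in
      if Req_EM_T r 0 then ((1, 0) : R * R) else ((fst a / r, - snd a / r) : R * R)
  end.

Lemma Kphase_spec k (a : K k) : Kabs (Kphase a) <= 1 /\ Kre (Kmul (Kphase a) a) = Kabs a.
Proof.
  destruct k; simpl.
  - destruct (Rle_dec 0 a); simpl; split.
    + rewrite Rabs_R1; lra. + rewrite Rabs_right; lra.
    + rewrite Rabs_left; lra. + rewrite Rabs_left; lra.
  - destruct a as [x y]; simpl. set (r := sqrt (x * x + y * y)).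
    assert (Hr : r * r = x * x + y * y) by (apply sqrt_sqrt; nra).
    destruct (Req_EM_T r 0) as [E|E]; simpl.
    + split; [replace (1 * 1 + 0 * 0) with 1 by ring; rewrite sqrt_1; lra|].
      fold r. rewrite E in *. nra.
    + split.
      * right. rewrite <- sqrt_1. f_equal.
        replace (x / r * (x / r) + - y / r * (- y / r)) with ((x * x + y * y) / (r * r))
          by (field; auto).
        rewrite <- Hr. field. auto.
      * fold r. replace (x / r * x - - y / r * y) with ((x * x + y * y) / r) by (field; auto).
        rewrite <- Hr. field. auto.
Qed.

Local Set Implicit Arguments.
Record is_normed k (X : NormedData k) : Prop := {
  vaddA : forall x y z : X, vadd x (vadd y z) = vadd (vadd x y) z;
  vaddC : forall x y : X, vadd x y = vadd y x;
  vadd0 : forall x : X, vadd x vzero = x;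
  vaddN : forall x : X, vadd x (vopp x) = vzero;
  vscalA : forall (a b : K k) (x : X), vscal a (vscal b x) = vscal (Kmul a b) x;
  vscal1 : forall x : X, vscal K1 x = x;
  vscalDr : forall (a : K k) (x y : X), vscal a (vadd x y) = vadd (vscal a x) (vscal a y);
  vscalDl : forall (a b : K k) (x : X), vscal (Kadd a b) x = vadd (vscal a x) (vscal b x);
  norm_eq0 : forall x : X, norm x = 0 -> x = vzero;
  norm_vscal : forall (a : K k) (x : X), norm (vscal a x) = Kabs a * norm x;
  norm_triang : forall x y : X, norm (vadd x y) <= norm x + norm y
}.
Unset Implicit Arguments.

Definition vcauchy {k} {X : NormedData k} (u : nat -> X) : Prop :=
  forall eps, eps > 0 -> exists N, forall m n, (m >= N)%nat -> (n >= N)%nat ->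
    norm (vsub (u m) (u n)) < eps.
Definition vconverges {k} {X : NormedData k} (u : nat -> X) (l : X) : Prop :=
  forall eps, eps > 0 -> exists N, forall n, (n >= N)%nat -> norm (vsub (u n) l) < eps.

Definition is_complete {k} (X : NormedData k) : Prop :=
  forall u : nat -> X, vcauchy u -> exists l, vconverges u l.

Lemma Banach_normed {k} (X : NormedData k) : is_Banach X -> is_normed X.
Proof. intros (h1 & h2 & h3 & h4 & h5 & h6 & h7 & h8 & h9 & h10 & h11 & _). now constructor. Qed.

Lemma Banach_complete {k} (X : NormedData k) : is_Banach X -> is_complete X.
Proof. intros (_ & _ & _ & _ & _ & _ & _ & _ & _ & _ & _ & h). exact h. Qed.

Definition rscal {k} {X : NormedData k} (t : R) (x : X) : X := vscal (Kreal t) x.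
Definition midpoint {k} {X : NormedData k} (x y : X) : X := rscal (/ 2) (vadd x y).

Section NormedSpace.
Context {k : scalar_field} {X : NormedData k} (HX : is_normed X).

Lemma vadd0l (x : X) : vadd vzero x = x.
Proof. rewrite (vaddC HX). apply (vadd0 HX). Qed.
Lemma vaddNl (x : X) : vadd (vopp x) x = vzero.
Proof. rewrite (vaddC HX). apply (vaddN HX). Qed.
Lemma vscal0 (x : X) : vscal K0 x = vzero.
Proof. apply (norm_eq0 HX). rewrite (norm_vscal HX), Kabs_K0. ring. Qed.
Lemma vopp_vscal (x : X) : vopp x = vscal (Kopp K1) x.
Proof.
  assert (E : vadd x (vscal (Kopp K1) x) = vzero).
  { rewrite <- (vscal1 HX x) at 1. rewrite <- (vscalDl HX), Kadd_opp. apply vscal0. }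
  rewrite <- (vadd0 HX (vopp x)), <- E, (vaddA HX), vaddNl. apply vadd0l.
Qed.
Lemma norm_vzero : norm (vzero : X) = 0.
Proof. rewrite <- (vscal0 vzero), (norm_vscal HX), Kabs_K0. ring. Qed.
Lemma norm_vopp (x : X) : norm (vopp x) = norm x.
Proof. rewrite vopp_vscal, (norm_vscal HX), Kabs_opp, Kabs_K1. ring. Qed.
Lemma norm_nonneg (x : X) : 0 <= norm x.
Proof.
  pose proof (norm_triang HX x (vopp x)).
  rewrite (vaddN HX), norm_vzero, norm_vopp in H. lra.
Qed.
Lemma vopp_vadd (x y : X) : vopp (vadd x y) = vadd (vopp x) (vopp y).
Proof. rewrite !vopp_vscal. apply (vscalDr HX). Qed.
Lemma vopp_vopp (x : X) : vopp (vopp x) = x.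
Proof.
  rewrite !vopp_vscal, (vscalA HX).
  replace (Kmul (Kopp K1) (Kopp K1)) with (@K1 k) by K_ring. apply (vscal1 HX).
Qed.
Lemma vsub_diag (x : X) : vsub x x = vzero.
Proof. apply (vaddN HX). Qed.
Lemma vsub_vadd (x y : X) : vadd (vsub x y) y = x.
Proof. unfold vsub. rewrite <- (vaddA HX), vaddNl. apply (vadd0 HX). Qed.
Lemma vsub_sym (x y : X) : vsub y x = vopp (vsub x y).
Proof. unfold vsub. rewrite vopp_vadd, vopp_vopp. apply (vaddC HX). Qed.
Lemma norm_vsub_sym (x y : X) : norm (vsub x y) = norm (vsub y x).
Proof. rewrite (vsub_sym x y), norm_vopp. reflexivity. Qed.
Lemma norm_vsub_le (x y : X) : norm (vsub x y) <= norm x + norm y.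
Proof. unfold vsub. rewrite <- (norm_vopp y). apply (norm_triang HX). Qed.
Lemma norm_vsub_triang (x y z : X) : norm (vsub x z) <= norm (vsub x y) + norm (vsub y z).
Proof.
  replace (vsub x z) with (vadd (vsub x y) (vsub y z)); [apply (norm_triang HX)|].
  unfold vsub. rewrite <- (vaddA HX), (vaddA HX (vopp y)), vaddNl, vadd0l. reflexivity.
Qed.
Lemma norm_rev_triang (x y : X) : Rabs (norm x - norm y) <= norm (vsub x y).
Proof.
  pose proof (norm_triang HX (vsub x y) y). pose proof (norm_triang HX (vsub y x) x).
  rewrite vsub_vadd in *. rewrite norm_vsub_sym in H0. apply Rabs_le. lra.
Qed.
Lemma norm_vsub_eq0 (x y : X) : norm (vsub x y) = 0 -> x = y.
Proof. intro E. apply (norm_eq0 HX) in E. rewrite <- (vsub_vadd x y), E. apply vadd0l. Qed.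
Lemma vsub_vadd_vadd (a b c d : X) : vsub (vadd a b) (vadd c d) = vadd (vsub a c) (vsub b d).
Proof.
  unfold vsub. rewrite vopp_vadd, !(vaddA HX). f_equal.
  rewrite <- !(vaddA HX). f_equal. apply (vaddC HX).
Qed.

Lemma rscal_rscal t u (x : X) : rscal t (rscal u x) = rscal (t * u) x.
Proof. unfold rscal. rewrite (vscalA HX), Kreal_mul. reflexivity. Qed.
Lemma rscal_vadd t (x y : X) : rscal t (vadd x y) = vadd (rscal t x) (rscal t y).
Proof. apply (vscalDr HX). Qed.
Lemma rscal_plus t u (x : X) : rscal (t + u) x = vadd (rscal t x) (rscal u x).
Proof. unfold rscal. rewrite <- Kreal_add. apply (vscalDl HX). Qed.
Lemma rscal_1 (x : X) : rscal 1 x = x.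
Proof. unfold rscal. rewrite Kreal_1. apply (vscal1 HX). Qed.
Lemma norm_rscal t (x : X) : norm (rscal t x) = Rabs t * norm x.
Proof. unfold rscal. rewrite (norm_vscal HX), Kabs_Kreal. reflexivity. Qed.
Lemma rscal_vopp t (x : X) : rscal t (vopp x) = vopp (rscal t x).
Proof. unfold rscal. rewrite !vopp_vscal, !(vscalA HX). f_equal. K_ring. Qed.
Lemma rscal_vsub t (x y : X) : vsub (rscal t x) (rscal t y) = rscal t (vsub x y).
Proof. unfold vsub. rewrite rscal_vadd, rscal_vopp. reflexivity. Qed.
Lemma vsub_rscal (t : R) (x : X) : vsub x (rscal t x) = rscal (1 - t) x.
Proof.
  unfold vsub. rewrite <- rscal_vopp, vopp_vscal. unfold rscal.
  rewrite (vscalA HX). rewrite <- (vscal1 HX x) at 1. rewrite <- (vscalDl HX).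
  f_equal. K_ring.
Qed.

Lemma norm_midpoint_le (x y : X) : norm (midpoint x y) <= (norm x + norm y) / 2.
Proof.
  unfold midpoint. rewrite norm_rscal, Rabs_right by lra.
  pose proof (norm_triang HX x y). lra.
Qed.
Lemma midpoint_same (x : X) : midpoint x x = x.
Proof.
  unfold midpoint. rewrite <- (rscal_1 x) at 1 2. rewrite <- rscal_plus, rscal_rscal.
  replace (/ 2 * (1 + 1)) with 1 by field. apply rscal_1.
Qed.
Lemma midpoint_rscal (t : R) (x y : X) : midpoint (rscal t x) (rscal t y) = rscal t (midpoint x y).
Proof. unfold midpoint. rewrite <- rscal_vadd, !rscal_rscal. f_equal. ring. Qed.
Lemma norm_midpoint_vsub (x y x' y' : X) :
  norm (vsub (midpoint x y) (midpoint x' y')) <= (norm (vsub x x') + norm (vsub y y')) / 2.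
Proof.
  unfold midpoint. rewrite rscal_vsub, norm_rscal, vsub_vadd_vadd, Rabs_right by lra.
  pose proof (norm_triang HX (vsub x x') (vsub y y')). lra.
Qed.
Lemma norm_midpoint_ge (x y : X) : norm (midpoint x y) >= norm y - norm (vsub x y) / 2.
Proof.
  pose proof (norm_midpoint_vsub x y y y).
  rewrite midpoint_same, vsub_diag, norm_vzero in H.
  pose proof (norm_rev_triang (midpoint x y) y). apply Rabs_le_inv in H0. lra.
Qed.
End NormedSpace.

Section LinearMaps.
Context {k : scalar_field} {X Y : NormedData k} (HX : is_normed X) (HY : is_normed Y).
Context (T : X -> Y) (HT : is_linear T).

Lemma linear_rscal t x : T (rscal t x) = rscal t (T x).
Proof. unfold rscal. apply HT. Qed.
Lemma linear_vzero : T vzero = vzero.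
Proof. rewrite <- (vscal0 HX vzero), (proj2 HT). apply (vscal0 HY). Qed.
Lemma linear_midpoint x y : T (midpoint x y) = midpoint (T x) (T y).
Proof. unfold midpoint. rewrite linear_rscal. f_equal. apply HT. Qed.

Lemma norm_le_of_opnorm1 : has_opnorm T 1 -> forall x, norm (T x) <= norm x.
Proof.
  intros [Hub _] x. destruct (Req_dec (norm x) 0) as [E|E].
  - apply (norm_eq0 HX) in E. subst x.
    rewrite linear_vzero, (norm_vzero HY), (norm_vzero HX). lra.
  - pose proof (norm_nonneg HX x).
    assert (Hinv : 0 < / norm x) by (apply Rinv_0_lt_compat; lra).
    assert (Hz : norm (rscal (/ norm x) x) <= 1).
    { rewrite (norm_rscal HX), Rabs_right by lra. right; field; auto. }
    specialize (Hub _ (ex_intro _ _ (conj Hz eq_refl))).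
    rewrite linear_rscal, (norm_rscal HY), Rabs_right in Hub by lra.
    apply Rmult_le_compat_l with (r := norm x) in Hub; [|lra].
    rewrite <- Rmult_assoc, Rinv_r, Rmult_1_l in Hub; lra.
Qed.
End LinearMaps.

Section Functionals.
Context {k : scalar_field} {X : NormedData k} (HX : is_normed X).
Context (f : X -> K k) (Hf : is_bounded_functional f).

Lemma functional_rscal t x : f (rscal t x) = Kmul (Kreal t) (f x).
Proof. apply Hf. Qed.
Lemma functional_vsub x y : f (vsub x y) = Kadd (f x) (Kopp (f y)).
Proof.
  destruct Hf as (Fadd & Fscal & _). unfold vsub.
  rewrite Fadd, (vopp_vscal HX), Fscal, Kmul_opp1. reflexivity.
Qed.
Lemma functional_bound : exists M, M >= 0 /\ forall x, Kabs (f x) <= M * norm x.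
Proof.
  destruct Hf as (_ & _ & M & HM). exists (Rmax M 0). split; [pose proof (Rmax_r M 0); lra|].
  intro x. eapply Rle_trans; [apply HM|].
  apply Rmult_le_compat_r; [apply (norm_nonneg HX)|apply Rmax_l].
Qed.
End Functionals.

Lemma bounded_functional_comp {k} {X Y : NormedData k} (HX : is_normed X) (HY : is_normed Y)
  (T : X -> Y) (f : Y -> K k) :
  is_bounded_linear T -> is_bounded_functional f -> is_bounded_functional (fun x => f (T x)).
Proof.
  intros [[TA TS] [MT HMT]] F. destruct (functional_bound HY f F) as (Mf & HMf0 & HMf).
  destruct F as (FA & FS & _). split; [|split].
  - intros x y. rewrite TA. apply FA.
  - intros a x. rewrite TS. apply FS.
  - exists (Mf * MT). intro x. eapply Rle_trans; [apply HMf|].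
    rewrite Rmult_assoc. apply Rmult_le_compat_l; auto. lra.
Qed.

(** * Uniform convexity and points of minimal norm *)

Definition closed_set {k} {X : NormedData k} (S : X -> Prop) : Prop :=
  forall x, (forall eps, eps > 0 -> exists y, S y /\ norm (vsub x y) < eps) -> S x.
Definition midconvex {k} {X : NormedData k} (S : X -> Prop) : Prop :=
  forall x y, S x -> S y -> S (midpoint x y).
(* Closed midpoint-convex sets are convex, so this is the closed convex hull of [A]. *)
Definition closed_convex_hull {k} {X : NormedData k} (A : X -> Prop) : X -> Prop :=
  fun p => forall S, closed_set S -> midconvex S -> (forall a, A a -> S a) -> S p.

Section ClosedConvexHulls.
Context {k : scalar_field} {X : NormedData k} (HX : is_normed X).

Lemma closed_set_vconverges (S : X -> Prop) u l :
  closed_set S -> (forall n, S (u n)) -> vconverges u l -> S l.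
Proof.
  intros HS Hu Hl. apply HS. intros eps He. destruct (Hl eps He) as [N HN].
  exists (u N). split; auto. rewrite (norm_vsub_sym HX). apply HN. lia.
Qed.

Lemma vconverges_norm u (l : X) : vconverges u l -> Un_cv (fun n => norm (u n)) (norm l).
Proof.
  intros Hl eps He. destruct (Hl eps He) as [N HN]. exists N. intros n Hn.
  eapply Rle_lt_trans; [apply (norm_rev_triang HX)|]. auto.
Qed.

Lemma closed_convex_hull_incl (A : X -> Prop) a : A a -> closed_convex_hull A a.
Proof. intros Ha S _ _ SA. auto. Qed.
Lemma closed_convex_hull_closed (A : X -> Prop) : closed_set (closed_convex_hull A).
Proof.
  intros x Hx S Sc Sm SA. apply Sc. intros eps He. destruct (Hx eps He) as (y & Hy & Hd).
  exists y. split; auto. apply Hy; auto.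
Qed.
Lemma closed_convex_hull_midconvex (A : X -> Prop) : midconvex (closed_convex_hull A).
Proof. intros x y Hx Hy S Sc Sm SA. apply Sm; [apply Hx | apply Hy]; auto. Qed.
Lemma closed_convex_hull_min (A S : X -> Prop) :
  closed_set S -> midconvex S -> (forall a, A a -> S a) -> forall p, closed_convex_hull A p -> S p.
Proof. intros Sc Sm SA p Hp. apply Hp; auto. Qed.
Lemma closed_convex_hull_mono (A B : X -> Prop) :
  (forall a, A a -> B a) -> forall p, closed_convex_hull A p -> closed_convex_hull B p.
Proof. intros AB p Hp S Sc Sm SB. apply Hp; auto. Qed.

Lemma closed_ball (r : R) : closed_set (fun x : X => norm x <= r).
Proof.
  intros x Hx. apply Rnot_lt_le. intro Hlt.
  destruct (Hx (norm x - r)) as (y & Hy & Hd); [lra|].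
  pose proof (norm_rev_triang HX x y). apply Rabs_le_inv in H. lra.
Qed.
Lemma midconvex_ball (r : R) : midconvex (fun x : X => norm x <= r).
Proof. intros x y Hx Hy. pose proof (norm_midpoint_le HX x y). lra. Qed.

Lemma norm_infimum (S : X -> Prop) : (exists p, S p) -> exists d,
  (forall p, S p -> d <= norm p) /\ (forall e, e > 0 -> exists p, S p /\ norm p < d + e).
Proof.
  intros [p0 Hp0].
  destruct (inf_approx (fun x => exists p, S p /\ x = norm p)) as (d & Hlow & Happ).
  - exists (norm p0), p0; auto.
  - intros x (p & _ & ->). apply (norm_nonneg HX).
  - exists d. split; [intros p Hp; apply Hlow; exists p; auto|].
    intros e He. destruct (Happ e He) as (x & (p & Hp & ->) & Hx). exists p; auto.
Qed.
End ClosedConvexHulls.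

Section UniformConvexity.
Context {k : scalar_field} {X : NormedData k} (HX : is_normed X) (HU : uniformly_convex X).

Lemma uniformly_convex_ball eps : eps > 0 -> exists delta, delta > 0 /\
  forall x y : X, norm x <= 1 -> norm y <= 1 ->
    norm (midpoint x y) >= 1 - delta -> norm (vsub x y) <= eps.
Proof.
  intro He. destruct (HU (eps / 2)) as (d0 & Hd0 & HU0); [lra|].
  exists (Rmin (d0 / 4) (Rmin (eps / 8) (1 / 4))). split; [repeat apply Rmin_pos; lra|].
  intros x y Hx Hy Hm. set (d := Rmin (d0 / 4) (Rmin (eps / 8) (1 / 4))) in *.
  assert (d1 : d <= d0 / 4) by apply Rmin_l.
  assert (d2 : d <= eps / 8) by (eapply Rle_trans; [apply Rmin_r | apply Rmin_l]).
  assert (d3 : d <= 1 / 4) by (eapply Rle_trans; [apply Rmin_r | apply Rmin_r]).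
  pose proof (norm_midpoint_le HX x y).
  (* Both points are nearly on the sphere; push them radially onto it. *)
  assert (push : forall z : X, 1 - 2 * d <= norm z <= 1 ->
            in_sphere (rscal (/ norm z) z) /\ norm (vsub z (rscal (/ norm z) z)) <= 2 * d).
  { intros z Hz. assert (Hi : / norm z >= 1).
    { replace 1 with (/ 1) by field. apply Rle_ge, Rinv_le_contravar; lra. }
    unfold in_sphere. rewrite (vsub_rscal HX), !(norm_rscal HX), Rabs_right, Rabs_left1 by lra.
    split; [field; lra|].
    replace (- (1 - / norm z) * norm z) with (1 - norm z) by (field; lra). lra. }
  destruct (push x) as [Sx Ex]; [lra|]. destruct (push y) as [Sy Ey]; [lra|].
  set (x' := rscal (/ norm x) x) in *. set (y' := rscal (/ norm y) y) in *.
  assert (Hm' : norm (midpoint x' y') > 1 - d0).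
  { pose proof (norm_midpoint_vsub HX x y x' y').
    pose proof (norm_rev_triang HX (midpoint x y) (midpoint x' y')).
    apply Rabs_le_inv in H1. lra. }
  assert (Hxy' : norm (vsub x' y') < eps / 2).
  { apply Rnot_le_lt. intro h. specialize (HU0 x' y' Sx Sy (Rle_ge _ _ h)).
    change (norm (midpoint x' y') <= 1 - d0) in HU0. lra. }
  pose proof (norm_vsub_triang HX x x' y). pose proof (norm_vsub_triang HX x' y' y).
  rewrite (norm_vsub_sym HX y' y) in H1. lra.
Qed.

Lemma uniformly_convex_scaled eps : eps > 0 -> exists delta, delta > 0 /\
  forall rho, rho > 0 -> forall x y : X, norm x <= rho -> norm y <= rho ->
    norm (midpoint x y) >= rho * (1 - delta) -> norm (vsub x y) <= rho * eps.
Proof.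
  intro He. destruct (uniformly_convex_ball eps He) as (d & Hd & HB). exists d. split; auto.
  intros rho Hr x y Hx Hy Hm.
  assert (Hir : / rho > 0) by (apply Rinv_0_lt_compat; lra).
  specialize (HB (rscal (/ rho) x) (rscal (/ rho) y)).
  rewrite (rscal_vsub HX), (midpoint_rscal HX), !(norm_rscal HX), Rabs_right in HB by lra.
  assert (Hdiv : forall a b, a <= rho * b -> / rho * a <= b).
  { intros a b Hab. apply Rmult_le_reg_l with rho; auto. rewrite <- Rmult_assoc, Rinv_r; lra. }
  assert (Hdiv' : forall a b, rho * b <= a -> b <= / rho * a).
  { intros a b Hab. apply Rmult_le_reg_l with rho; auto. rewrite <- Rmult_assoc, Rinv_r; lra. }
  assert (norm (vsub x y) * / rho <= eps).
  { rewrite Rmult_comm. apply HB; [apply Hdiv; lra | apply Hdiv; lra | apply Rle_ge, Hdiv'; lra]. }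
  apply Rmult_le_compat_r with (r := rho) in H; [|lra].
  rewrite Rmult_assoc, Rinv_l, Rmult_1_r in H; lra.
Qed.

Lemma min_norm_point_unique (S : X -> Prop) p q : midconvex S -> S p -> S q ->
  (forall z, S z -> norm p <= norm z) -> norm q <= norm p -> p = q.
Proof.
  intros Sm Sp Sq Hmin Hq.
  pose proof (Hmin q Sq). pose proof (Hmin _ (Sm _ _ Sp Sq)) as Hmid.
  destruct (Rle_lt_dec (norm p) 0) as [H0|H0].
  - pose proof (norm_nonneg HX p). pose proof (norm_nonneg HX q).
    rewrite (norm_eq0 HX p), (norm_eq0 HX q); auto; lra.
  - apply (norm_vsub_eq0 HX). apply Rle_antisym; [|apply (norm_nonneg HX)].
    apply Rnot_lt_le. intro Hlt.
    destruct (uniformly_convex_scaled (norm (vsub p q) / (2 * norm p))) as (dl & Hdl & HUC).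
    { apply Rdiv_lt_0_compat; lra. }
    pose proof (HUC (norm p) H0 p q ltac:(lra) ltac:(lra) ltac:(nra)).
    replace (norm p * (norm (vsub p q) / (2 * norm p))) with (norm (vsub p q) / 2) in H1
      by (field; lra).
    lra.
Qed.

(* Two late terms and their midpoint all have norm close to [d], so by uniform convexity
   the terms are close to each other. *)
Lemma minimizing_sequence_cauchy (C : nat -> X -> Prop) (p : nat -> X) (d : R) :
  (forall n x, C (S n) x -> C n x) -> (forall n, midconvex (C n)) -> (forall n, C n (p n)) ->
  (forall e, e > 0 -> exists N, forall n, (n >= N)%nat ->
     (forall z, C n z -> d - e <= norm z) /\ norm (p n) <= d + e) ->
  vcauchy p.
Proof.
  intros Cdec Cmid Cp Hd eps He.
  assert (Cmono : forall n m, (n <= m)%nat -> forall x, C m x -> C n x).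
  { intros n m Hnm. induction Hnm; auto. }
  destruct (Rle_lt_dec d 0) as [Hd0|Hd0].
  - destruct (Hd (eps / 3)) as [N HN]; [lra|]. exists N. intros m n Hm Hn.
    pose proof (proj2 (HN m Hm)). pose proof (proj2 (HN n Hn)).
    pose proof (norm_vsub_le HX (p m) (p n)). lra.
  - destruct (uniformly_convex_scaled (eps / (4 * d))) as (dl & Hdl & HUC).
    { apply Rdiv_lt_0_compat; lra. }
    set (g := Rmin (d * dl / 2) d).
    assert (g1 : g <= d * dl / 2) by apply Rmin_l. assert (g2 : g <= d) by apply Rmin_r.
    assert (g0 : g > 0) by (apply Rmin_pos; [apply Rdiv_lt_0_compat; nra | lra]).
    destruct (Hd g g0) as [N HN].
    assert (ordered : forall a b, (a >= N)%nat -> (b >= a)%nat ->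
              norm (vsub (p a) (p b)) <= eps / 2).
    { intros a b Ha Hb.
      destruct (HN a Ha) as [Hlow Ha']. destruct (HN b ltac:(lia)) as [_ Hb'].
      pose proof (Hlow _ (Cmid a _ _ (Cp a) (Cmono a b Hb _ (Cp b)))).
      assert (g * dl >= 0) by nra.
      pose proof (HUC (d + g) ltac:(lra) (p a) (p b) ltac:(lra) ltac:(lra) ltac:(nra)).
      assert ((d + g) * (eps / (4 * d)) <= eps / 2).
      { apply Rle_trans with (2 * d * (eps / (4 * d))); [|right; field; lra].
        apply Rmult_le_compat_r; [left; apply Rdiv_lt_0_compat|]; lra. }
      lra. }
    exists N. intros m n Hm Hn. destruct (Nat.le_ge_cases m n) as [Hmn|Hmn].
    + pose proof (ordered m n Hm Hmn). lra.
    + pose proof (ordered n m Hn Hmn). rewrite (norm_vsub_sym HX). lra.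
Qed.
End UniformConvexity.

Lemma nested_min_norm_point {k} {X : NormedData k} (HX : is_normed X) (HC : is_complete X)
  (HU : uniformly_convex X) (C : nat -> X -> Prop) (B : R) :
  (forall n, closed_set (C n)) -> (forall n, midconvex (C n)) -> (forall n x, C (S n) x -> C n x) ->
  (forall n, exists p, C n p /\ norm p <= B) ->
  exists p, (forall n, C n p) /\ forall q, (forall n, C n q) -> norm p <= norm q.
Proof.
  intros Ccl Cmid Cdec Cne.
  assert (Cmono : forall n m, (n <= m)%nat -> forall x, C m x -> C n x).
  { intros n m Hnm. induction Hnm; auto. }
  destruct (choice (fun n d => (forall p, C n p -> d <= norm p) /\
      (forall e, e > 0 -> exists p, C n p /\ norm p < d + e))) as [d Hd].
  { intro n. apply (norm_infimum HX). destruct (Cne n) as (p & Hp & _). exists p; auto. }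
  assert (dlow : forall n p, C n p -> d n <= norm p) by (intro n; apply Hd).
  assert (dmono : forall n m, (n <= m)%nat -> d n <= d m).
  { intros n m Hnm. apply Rnot_lt_le. intro Hlt.
    destruct (proj2 (Hd m) (d n - d m)) as (p & Hp & Hn); [lra|].
    pose proof (dlow n p (Cmono n m Hnm p Hp)). lra. }
  destruct (sup_approx (fun x => exists n, x = d n) B) as (dd & Hdd & _ & Happ).
  { exists (d 0%nat), 0%nat; auto. }
  { intros x (n & ->). destruct (Cne n) as (p & Hp & HpB). pose proof (dlow n p Hp). lra. }
  assert (dle : forall n, d n <= dd) by (intro n; apply Hdd; exists n; auto).
  destruct (choice (fun n p => C n p /\ norm p < d n + / (INR n + 1))) as [pp Hpp].
  { intro n. apply (proj2 (Hd n)), inv_INR_succ_pos. }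
  destruct (HC pp) as [l Hl].
  { apply (minimizing_sequence_cauchy HX HU C pp dd Cdec Cmid (fun n => proj1 (Hpp n))).
    intros e He. destruct (Happ e He) as (x & (N0 & ->) & HN0).
    destruct (archimed_inv e He) as [N1 HN1]. exists (max N0 N1). intros n Hn. split.
    - intros z Hz. pose proof (dlow n z Hz). pose proof (dmono N0 n ltac:(lia)). lra.
    - pose proof (proj2 (Hpp n)). pose proof (dle n).
      pose proof (inv_INR_succ_le N1 n ltac:(lia)). lra. }
  exists l. split.
  - intro n. apply (closed_set_vconverges HX (C n) (fun m => pp (n + m)%nat)); auto.
    + intro m. apply (Cmono n (n + m)%nat); [lia | apply Hpp].
    + intros eps He. destruct (Hl eps He) as [N HN]. exists N. intros m Hm. apply HN. lia.
  - intros q Hq. apply Rle_trans with dd.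
    + apply le_epsilon. intros e He. destruct (archimed_inv e He) as [N HN].
      apply (Un_cv_le _ _ _ N (vconverges_norm HX pp l Hl)). intros n Hn.
      pose proof (proj2 (Hpp n)). pose proof (dle n). pose proof (inv_INR_succ_le N n Hn). lra.
    + apply Rnot_lt_le. intro Hlt.
      destruct (Happ (dd - norm q)) as (x & (n & ->) & Hx); [lra|].
      pose proof (dlow n q (Hq n)). lra.
Qed.

(** * Weak sequential compactness *)

Definition eventually_subset (J I : nat -> Prop) : Prop :=
  exists N, forall m, (m >= N)%nat -> J m -> I m.
Definition range_of (e : nat -> nat) : nat -> Prop := fun m => exists j, m = e j.

Section IncreasingSequences.
Context (e : nat -> nat) (He : forall j, (e j < e (S j))%nat).

Lemma increasing_lt i j : (i < j)%nat -> (e i < e j)%nat.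
Proof. intro Hij. induction Hij; [apply He | pose proof (He m); lia]. Qed.
Lemma increasing_ge j : (e j >= j)%nat.
Proof. induction j as [|j IH]; [lia | pose proof (He j); lia]. Qed.
Lemma range_of_infinite : infinite_set (range_of e).
Proof. intro N. exists (e N). split; [apply increasing_ge | exists N; auto]. Qed.
End IncreasingSequences.

Lemma increasing_selection (I : nat -> nat -> Prop) : (forall j, infinite_set (I j)) ->
  exists e, (forall j, (e j < e (S j))%nat) /\ forall j, I j (e j).
Proof.
  intro HI. destruct (choice (fun (jN : nat * nat) n =>
      (n >= snd jN)%nat /\ I (fst jN) n)) as [G HG].
  { intros [j N]. apply (HI j N). }
  exists (nat_rect (fun _ => nat) (G (0, 0)%nat) (fun j ej => G (S j, S ej))).
  split; intro j; [|destruct j]; simpl.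
  - apply (HG (S j, S _)).
  - apply (HG (0, 0)%nat).
  - apply (HG (S j, S _)).
Qed.

(* The subsequence is diagonalised from a chain of sets, each nearly maximising [r] among the
   infinite subsets of its predecessor. *)
Section Stabilization.
Context (r : (nat -> Prop) -> R) (B : R).
Context (r_antitone : forall I J, infinite_set I -> infinite_set J ->
  eventually_subset J I -> r I <= r J).
Context (r_bounded : forall I, infinite_set I -> r I <= B).

Lemma near_sup_subset I eps : infinite_set I -> eps > 0 ->
  exists J, infinite_set J /\ (forall m, J m -> I m) /\
    forall J', infinite_set J' -> (forall m, J' m -> I m) -> r J' <= r J + eps.
Proof.
  intros HI He.
  destruct (sup_approx (fun x => exists J, infinite_set J /\ (forall m, J m -> I m) /\ x = r J) B)
    as (s & Hs & _ & Happ).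
  { exists (r I), I. auto. }
  { intros x (J & HJ & _ & ->). auto. }
  destruct (Happ eps He) as (x & (J & HJ & HJI & ->) & Hx). exists J. repeat split; auto.
  intros J' HJ' HJ'I. assert (r J' <= s) by (apply Hs; exists J'; auto). lra.
Qed.

Lemma near_sup_chain : exists Ich : nat -> nat -> Prop,
  (forall j, infinite_set (Ich j)) /\ (forall j m, Ich (S j) m -> Ich j m) /\
  forall j J, infinite_set J -> (forall m, J m -> Ich j m) -> r J <= r (Ich (S j)) + / (INR j + 1).
Proof.
  destruct (choice (fun (Ij : (nat -> Prop) * nat) J => infinite_set (fst Ij) ->
      infinite_set J /\ (forall m, J m -> fst Ij m) /\
      forall J', infinite_set J' -> (forall m, J' m -> fst Ij m) ->
        r J' <= r J + / (INR (snd Ij) + 1))) as [F HF].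
  { intros [I j]. destruct (classic (infinite_set I)) as [HI|HI].
    - destruct (near_sup_subset I (/ (INR j + 1)) HI (inv_INR_succ_pos j)) as (J & HJ).
      exists J. auto.
    - exists I. intro; contradiction. }
  set (Ich := nat_rect (fun _ => nat -> Prop) (fun _ => True) (fun j I => F (I, j))).
  assert (Hinf : forall j, infinite_set (Ich j)).
  { induction j as [|j IH]; [intro N; exists N; split; [lia | exact I]|].
    apply (HF (Ich j, j) IH). }
  exists Ich. repeat split; auto.
  - intros j m. apply (HF (Ich j, j) (Hinf j)).
  - intros j J HJ HJI. apply (HF (Ich j, j) (Hinf j)); auto.
Qed.

Lemma stabilizing_subsequence : exists e, (forall j, (e j < e (S j))%nat) /\
  forall J, infinite_set J -> (forall m, J m -> range_of e m) -> r J = r (range_of e).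
Proof.
  destruct near_sup_chain as (Ich & Hinf & Hdec & Hnear).
  destruct (increasing_selection Ich Hinf) as (e & He & HeI).
  assert (Imono : forall j i m, (j <= i)%nat -> Ich i m -> Ich j m).
  { intros j i m Hji. induction Hji; auto. }
  assert (tail : forall j m, (m >= e j)%nat -> range_of e m -> Ich j m).
  { intros j m Hm (i & ->). destruct (Nat.le_gt_cases j i) as [Hji|Hij].
    - apply (Imono j i); auto.
    - pose proof (increasing_lt e He i j Hij). lia. }
  exists e. split; auto. intros J HJ HJY. apply Rle_antisym.
  2: { apply r_antitone; auto. apply range_of_infinite; auto. exists O. auto. }
  apply le_epsilon. intros eps Heps. destruct (archimed_inv eps Heps) as [j Hj].
  set (J' := fun m => J m /\ (m >= e j)%nat).
  assert (HJ' : infinite_set J').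
  { intro N. destruct (HJ (max N (e j))) as (n & Hn & Jn). exists n. unfold J'.
    repeat split; auto; lia. }
  assert (r J <= r J') by (apply r_antitone; auto; exists O; intros m _ [Jm _]; auto).
  assert (r J' <= r (Ich (S j)) + / (INR j + 1)).
  { apply Hnear; auto. intros m [Jm Hm]. apply tail; auto. }
  assert (r (Ich (S j)) <= r (range_of e)).
  { apply r_antitone; auto. apply range_of_infinite; auto.
    exists (e (S j)). intros m Hm Ym. apply tail; auto. }
  lra.
Qed.
End Stabilization.

Section WeakCompactness.
Context {k : scalar_field} {X : NormedData k}.
Context (HX : is_normed X) (HC : is_complete X) (HU : uniformly_convex X).
Context (u : nat -> X) (Hu : forall n, norm (u n) <= 1).

Definition tail_set (I : nat -> Prop) (n : nat) : X -> Prop :=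
  fun a => exists m, (m >= n)%nat /\ I m /\ a = u m.
(* Contains every weak cluster point of the subsequence of [u] indexed by [I]. *)
Definition asymptotic_hull (I : nat -> Prop) : X -> Prop :=
  fun p => forall n, closed_convex_hull (tail_set I n) p.

Lemma asymptotic_hull_eventually_subset J I p :
  eventually_subset J I -> asymptotic_hull J p -> asymptotic_hull I p.
Proof.
  intros [N HN] Hp n. apply (closed_convex_hull_mono (tail_set J (max n N))); [|apply Hp].
  intros a (m & Hm & Jm & ->). exists m. repeat split; auto; try lia. apply HN; auto; lia.
Qed.
Lemma asymptotic_hull_midconvex I : midconvex (asymptotic_hull I).
Proof. intros x y Hx Hy n. apply closed_convex_hull_midconvex; auto. Qed.
Lemma asymptotic_hull_norm_le1 I p : asymptotic_hull I p -> norm p <= 1.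
Proof.
  intro Hp. apply (closed_convex_hull_min (tail_set I 0) (fun x => norm x <= 1)).
  - apply (closed_ball HX). - apply (midconvex_ball HX).
  - intros a (m & _ & _ & ->). auto. - apply Hp.
Qed.
Lemma asymptotic_hull_min_norm I : infinite_set I ->
  exists p, asymptotic_hull I p /\ forall q, asymptotic_hull I q -> norm p <= norm q.
Proof.
  intro HI. apply (nested_min_norm_point HX HC HU (fun n => closed_convex_hull (tail_set I n)) 1).
  - intro; apply closed_convex_hull_closed.
  - intro; apply closed_convex_hull_midconvex.
  - intros n x. apply closed_convex_hull_mono. intros a (m & Hm & Im & ->).
    exists m; repeat split; auto; lia.
  - intro n. destruct (HI n) as (m & Hm & Im). exists (u m). split; auto.
    apply closed_convex_hull_incl. exists m; auto.
Qed.

(* For finite [I] the choice below is arbitrary; only infinite [I] are ever used. *)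
Definition hull_min_norm (I : nat -> Prop) : R :=
  epsilon (inhabits 0) (fun r => exists p, asymptotic_hull I p /\ norm p = r /\
    forall q, asymptotic_hull I q -> r <= norm q).

Lemma hull_min_norm_spec I : infinite_set I -> exists p, asymptotic_hull I p /\
  norm p = hull_min_norm I /\ forall q, asymptotic_hull I q -> hull_min_norm I <= norm q.
Proof.
  intro HI. unfold hull_min_norm. apply epsilon_spec.
  destruct (asymptotic_hull_min_norm I HI) as (p & Hp & Hm). exists (norm p), p. auto.
Qed.
Lemma hull_min_norm_antitone I J : infinite_set I -> infinite_set J ->
  eventually_subset J I -> hull_min_norm I <= hull_min_norm J.
Proof.
  intros HI HJ Hs. destruct (hull_min_norm_spec J HJ) as (p & Hp & Hn & _).
  destruct (hull_min_norm_spec I HI) as (_ & _ & _ & Hm). rewrite <- Hn.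
  apply Hm. apply (asymptotic_hull_eventually_subset J); auto.
Qed.
Lemma hull_min_norm_le1 I : infinite_set I -> hull_min_norm I <= 1.
Proof.
  intro HI. destruct (hull_min_norm_spec I HI) as (p & Hp & Hn & _). rewrite <- Hn.
  apply (asymptotic_hull_norm_le1 I); auto.
Qed.

Lemma asymptotic_hull_halfspace (g : X -> K k) (s : K k) (c : R) I :
  is_bounded_functional g -> Kabs s <= 1 -> (forall m, I m -> c <= Kre (Kmul s (g (u m)))) ->
  forall p, asymptotic_hull I p -> c <= Kre (Kmul s (g p)).
Proof.
  intros Hg Hs HI p Hp.
  apply (closed_convex_hull_min (tail_set I 0) (fun v => c <= Kre (Kmul s (g v))));
    [| | | apply Hp].
  - intros v Hv. apply Rnot_lt_le. intro Hlt.
    destruct (functional_bound HX g Hg) as (M & HM0 & HM).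
    set (eta := c - Kre (Kmul s (g v))).
    destruct (Hv (eta / (M + 1))) as (y & Hy & Hd); [apply Rdiv_lt_0_compat; unfold eta; lra|].
    assert (Kre (Kmul s (g y)) - Kre (Kmul s (g v)) <= M * norm (vsub y v)).
    { replace (Kre (Kmul s (g y)) - Kre (Kmul s (g v))) with (Kre (Kmul s (g (vsub y v)))).
      - eapply Rle_trans; [apply Kre_mul_le; auto | apply HM].
      - rewrite (functional_vsub HX g Hg), Kre_mul_add, Kre_mul_opp. ring. }
    rewrite (norm_vsub_sym HX) in H.
    assert (M * norm (vsub v y) <= M * (eta / (M + 1))) by (apply Rmult_le_compat_l; lra).
    assert (M * (eta / (M + 1)) < eta).
    { apply Rmult_lt_reg_l with (M + 1); [lra|]. field_simplify; [|lra]. unfold eta in *. nra. }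
    unfold eta in *. lra.
  - intros x y Hx Hy. unfold midpoint. rewrite (functional_rscal g Hg), Kre_mul_Kreal.
    destruct Hg as (Gadd & _ & _). rewrite Gadd, Kre_mul_add. lra.
  - intros a (m & _ & Im & ->). auto.
Qed.

(* Otherwise a rotated real part of [g] would put infinitely many terms, but not [p], in a
   closed half-space. *)
Lemma weak_limit_of_asymptotic_hulls (e : nat -> nat) (p : X) :
  (forall j, (e j < e (S j))%nat) ->
  (forall J, infinite_set J -> (forall m, J m -> range_of e m) -> asymptotic_hull J p) ->
  forall g, is_bounded_functional g ->
    Un_cv (fun j => Kabs (Kadd (g (u (e j))) (Kopp (g p)))) 0.
Proof.
  intros He Hp g Hg. apply NNPP. intro Hn.
  apply not_Un_cv_0 in Hn. destruct Hn as (eps & Heps & Hinf).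
  set (a := fun j => Kadd (g (u (e j))) (Kopp (g p))).
  destruct (infinite_large_rotated_re k a eps) as (s & Hs & Hrot).
  { intro N. destruct (Hinf N) as (j & Hj & Hje). exists j. split; auto.
    rewrite Rabs_right in Hje by (apply Rle_ge, Kabs_pos). exact Hje. }
  set (J := fun m => exists j, m = e j /\ eps <= 2 * Kre (Kmul s (a j))).
  assert (HJ : infinite_set J).
  { intro N. destruct (Hrot N) as (j & Hj & Hja). exists (e j). split.
    - pose proof (increasing_ge e He j). lia.
    - exists j. auto. }
  pose proof (asymptotic_hull_halfspace g s (Kre (Kmul s (g p)) + eps / 2) J Hg Hs) as Hhalf.
  enough (Kre (Kmul s (g p)) + eps / 2 <= Kre (Kmul s (g p))) by lra.
  apply Hhalf.
  - intros m (j & -> & Hj). unfold a in Hj. rewrite Kre_mul_add, Kre_mul_opp in Hj. lra.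
  - apply Hp; auto. intros m (j & -> & _). exists j. reflexivity.
Qed.

(* The weak limit is the point of minimal norm in the asymptotic hull of a subsequence on
   which that minimal norm has stabilised. *)
Lemma uniformly_convex_weak_compactness : exists e : nat -> nat,
  (forall j, (e j < e (S j))%nat) /\ exists p, norm p <= 1 /\
  forall g, is_bounded_functional g -> Un_cv (fun j => Kabs (Kadd (g (u (e j))) (Kopp (g p)))) 0.
Proof.
  destruct (stabilizing_subsequence hull_min_norm 1 hull_min_norm_antitone hull_min_norm_le1)
    as (e & He & Hstab).
  set (Y := range_of e). assert (HY : infinite_set Y) by (apply range_of_infinite; auto).
  destruct (hull_min_norm_spec Y HY) as (p & HpY & Hpn & Hpmin).
  exists e. split; auto. exists p. split; [apply (asymptotic_hull_norm_le1 Y); auto|].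
  apply weak_limit_of_asymptotic_hulls; auto.
  intros J HJ HJY. destruct (hull_min_norm_spec J HJ) as (q & Hq & Hqn & _).
  assert (HqY : asymptotic_hull Y q).
  { apply (asymptotic_hull_eventually_subset J); auto. exists O. intros m _ Jm. apply HJY, Jm. }
  replace p with q; auto. symmetry.
  apply (min_norm_point_unique HX HU (asymptotic_hull Y)); auto.
  - apply asymptotic_hull_midconvex.
  - intros z Hz. rewrite Hpn. auto.
  - rewrite Hqn, Hpn, (Hstab J HJ HJY). apply Rle_refl.
Qed.
End WeakCompactness.

(** * The strong Bishop-Phelps-Bollobás property *)

Section StrongBishopPhelpsBollobas.
Context {k : scalar_field} {X Y : NormedData k} (HX : is_normed X) (HY : is_normed Y).
Context (T : X -> Y) (HT : is_linear T) (Hop : has_opnorm T 1).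

Lemma uniformly_convex_norming_close (HU : uniformly_convex X) eps : eps > 0 ->
  exists delta, delta > 0 /\ forall x p : X, in_sphere x -> in_sphere p -> norm (T p) = 1 ->
    norm (vsub (T x) (T p)) < delta -> norm (vsub x p) < eps.
Proof.
  intro He. destruct (HU eps He) as (dl & Hdl & HUC). exists dl. split; auto.
  intros x p Hx Hp HTp Hclose. apply Rnot_le_lt. intro Hfar.
  specialize (HUC x p Hx Hp (Rle_ge _ _ Hfar)). change (norm (midpoint x p) <= 1 - dl) in HUC.
  pose proof (norm_le_of_opnorm1 HX HY T HT Hop (midpoint x p)).
  rewrite (linear_midpoint T HT) in H.
  pose proof (norm_midpoint_ge HY (T x) (T p)). lra.
Qed.

Lemma norm_limit_of_almost_norming (x : nat -> X) (p : X) :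
  (forall j, norm (T (x j)) > 1 - / (INR j + 1)) ->
  Un_cv (fun j => norm (vsub (T (x j)) (T p))) 0 -> norm p <= 1 -> norm (T p) = 1.
Proof.
  intros Hx Hcv Hp. pose proof (norm_le_of_opnorm1 HX HY T HT Hop p).
  apply Rle_antisym; [lra|]. apply le_epsilon. intros e He.
  destruct (Un_cv_0_abs _ Hcv (e / 2)) as [N HN]; [lra|].
  destruct (archimed_inv (e / 2)) as [N' HN']; [lra|].
  set (j := max N N'). specialize (HN j ltac:(unfold j; lia)). specialize (Hx j).
  pose proof (inv_INR_succ_le N' j ltac:(unfold j; lia)).
  pose proof (norm_rev_triang HY (T (x j)) (T p)). apply Rabs_le_inv in H1.
  rewrite Rabs_right in HN by (apply Rle_ge, (norm_nonneg HY)). lra.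
Qed.
End StrongBishopPhelpsBollobas.

Theorem uniformly_convex_Schur_sBPBp {k} (X Y : NormedData k) :
  is_normed X -> is_complete X -> is_normed Y ->
  uniformly_convex X -> schur_property Y -> sBPBp X Y.
Proof.
  intros HX HC HY HU HS eps He T HT Hop. pose proof (proj1 HT) as Tlin.
  apply NNPP. intro Hno.
  assert (Hbad : forall n : nat, exists x, in_sphere x /\ norm (T x) > 1 - / (INR n + 1) /\
     forall x1, in_sphere x1 -> norm (T x1) = 1 -> norm (vsub x1 x) >= eps).
  { intro n. apply NNPP. intro Hn. apply Hno. exists (/ (INR n + 1)).
    split; [apply inv_INR_succ_pos|]. intros x0 Hs0 HT0. apply NNPP. intro Hn2. apply Hn.
    exists x0. repeat split; auto. intros x1 Hs1 HT1. apply Rnot_lt_ge. intro Hlt.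
    apply Hn2. exists x1; auto. }
  destruct (choice _ Hbad) as [x Hx].
  destruct (uniformly_convex_weak_compactness HX HC HU x) as (e & He_incr & p & Hp1 & Hw).
  { intro n. destruct (Hx n) as [Hs _]. unfold in_sphere in Hs. lra. }
  assert (Hcv : Un_cv (fun j => norm (vsub (T (x (e j))) (T p))) 0).
  { apply HS. intros f Hf. apply (Hw (fun v => f (T v))).
    apply (bounded_functional_comp HX HY); auto. }
  assert (HTp : norm (T p) = 1).
  { apply (norm_limit_of_almost_norming HX HY T Tlin Hop (fun j => x (e j))); auto.
    intro j. destruct (Hx (e j)) as [_ [Hj _]].
    pose proof (inv_INR_succ_le j (e j) (increasing_ge e He_incr j)). lra. }
  assert (Hp : in_sphere p).
  { unfold in_sphere. pose proof (norm_le_of_opnorm1 HX HY T Tlin Hop p). lra. }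
  destruct (uniformly_convex_norming_close HX HY T Tlin Hop HU eps He) as (dl & Hdl & Hclose).
  destruct (Un_cv_0_abs _ Hcv dl Hdl) as [N HN]. specialize (HN N (le_n N)).
  rewrite Rabs_right in HN by (apply Rle_ge, (norm_nonneg HY)).
  destruct (Hx (e N)) as [HsN [_ Hfar]]. specialize (Hfar p Hp HTp).
  rewrite (norm_vsub_sym HX) in Hfar. pose proof (Hclose _ _ HsN Hp HTp HN). lra.
Qed.

(** * The sequence spaces l1 and l2 *)

Lemma lseq_ext {k P} (x y : lseq k P) : (forall n, lval x n = lval y n) -> x = y.
Proof.
  intro H. destruct x as [x Hx], y as [y Hy]. simpl in H.
  assert (x = y) by (apply functional_extensionality; auto). subst y.
  f_equal. apply proof_irrelevance.
Qed.

Lemma sum_f_R0_incr (a : nat -> R) n m :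
  (forall i, 0 <= a i) -> (n <= m)%nat -> sum_f_R0 a n <= sum_f_R0 a m.
Proof. intros Ha Hnm. induction Hnm; [lra|]. simpl. pose proof (Ha (S m)). lra. Qed.
Lemma term_le_sum_f_R0 (a : nat -> R) n : (forall i, 0 <= a i) -> a n <= sum_f_R0 a n.
Proof. intro Ha. destruct n; simpl; [lra|]. pose proof (cond_pos_sum a n Ha). lra. Qed.

Section SupPartialSums.
Context (a : nat -> R) (Hb : partial_sums_bounded a).

Lemma sup_partial_sums_ub N : sum_f_R0 a N <= sup_partial_sums a Hb.
Proof.
  unfold sup_partial_sums. destruct (completeness _ _ _) as [s [Hub Hl]]. simpl.
  apply Hub. exists N; auto.
Qed.
Lemma sup_partial_sums_least M : (forall N, sum_f_R0 a N <= M) -> sup_partial_sums a Hb <= M.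
Proof.
  intro HM. unfold sup_partial_sums. destruct (completeness _ _ _) as [s [Hub Hl]]. simpl.
  apply Hl. intros r [N ->]. auto.
Qed.
Lemma sup_partial_sums_approx eps : eps > 0 -> exists N, sum_f_R0 a N > sup_partial_sums a Hb - eps.
Proof.
  intro He. apply NNPP. intro Hn.
  assert (sup_partial_sums a Hb <= sup_partial_sums a Hb - eps); [|lra].
  apply sup_partial_sums_least. intro N. apply Rnot_lt_le. intro Hlt. apply Hn. exists N. lra.
Qed.

Context (Ha : forall i, 0 <= a i).

Lemma sup_partial_sums_nonneg : 0 <= sup_partial_sums a Hb.
Proof. pose proof (sup_partial_sums_ub 0). pose proof (cond_pos_sum a 0 Ha). lra. Qed.
Lemma sup_partial_sums_cv : Un_cv (sum_f_R0 a) (sup_partial_sums a Hb).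
Proof.
  intros eps He. destruct (sup_partial_sums_approx eps He) as [N HN]. exists N. intros n Hn.
  unfold R_dist. pose proof (sup_partial_sums_ub n). pose proof (sum_f_R0_incr a N n Ha Hn).
  rewrite Rabs_left1 by lra. lra.
Qed.
Lemma sup_partial_sums_eq0 : sup_partial_sums a Hb = 0 -> forall n, a n = 0.
Proof.
  intros E n. pose proof (term_le_sum_f_R0 a n Ha). pose proof (sup_partial_sums_ub n).
  pose proof (Ha n). lra.
Qed.
End SupPartialSums.

Lemma sup_partial_sums_scale a b Ha Hb c : 0 <= c -> (forall i, 0 <= a i) ->
  (forall n, b n = c * a n) -> sup_partial_sums b Hb = c * sup_partial_sums a Ha.
Proof.
  intros Hc Hpos E.
  assert (Hsum : forall N, sum_f_R0 b N = c * sum_f_R0 a N).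
  { intro N. rewrite (sum_eq b (fun n => a n * c)) by (intros; rewrite E; ring).
    rewrite <- scal_sum. ring. }
  apply Rle_antisym.
  - apply sup_partial_sums_least. intro N. rewrite Hsum.
    apply Rmult_le_compat_l; auto. apply sup_partial_sums_ub.
  - destruct (Req_dec c 0) as [->|Hc0].
    + rewrite Rmult_0_l. apply sup_partial_sums_nonneg. intro i; rewrite E; lra.
    + enough (sup_partial_sums a Ha <= sup_partial_sums b Hb / c).
      { apply Rmult_le_compat_l with (r := c) in H; [|lra]. field_simplify in H; lra. }
      apply sup_partial_sums_least. intro N. pose proof (sup_partial_sums_ub b Hb N).
      rewrite Hsum in H. apply Rmult_le_reg_l with c; [lra|]. field_simplify; lra.
Qed.

Lemma sup_partial_sums_le_add a b c Ha Hb Hc : (forall n, c n <= a n + b n) ->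
  sup_partial_sums c Hc <= sup_partial_sums a Ha + sup_partial_sums b Hb.
Proof.
  intro E. apply sup_partial_sums_least. intro N.
  apply Rle_trans with (sum_f_R0 (fun n => a n + b n) N); [apply sum_Rle; auto|].
  rewrite plus_sum. pose proof (sup_partial_sums_ub a Ha N).
  pose proof (sup_partial_sums_ub b Hb N). lra.
Qed.

Lemma ell1_normed k : is_normed (ell1 k).
Proof.
  constructor; try (intros; apply lseq_ext; intro n; simpl; K_ring).
  - intros x Hx. apply lseq_ext. intro n. simpl. apply Kabs_eq0.
    apply (sup_partial_sums_eq0 (fun n => Kabs (lval x n)) (lprop x)); auto.
    intro; apply Kabs_pos.
  - intros a x. simpl. unfold l1_norm. apply sup_partial_sums_scale;
      [apply Kabs_pos | intro; apply Kabs_pos | intro n; apply Kabs_mul].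
  - intros x y. simpl. unfold l1_norm. apply sup_partial_sums_le_add. intro n. apply Kabs_triang.
Qed.

Lemma sum_f_R0_sqr_comb (a b : nat -> R) p q N :
  sum_f_R0 (fun i => (p * a i - q * b i) ^ 2) N =
  p ^ 2 * sum_f_R0 (fun i => a i ^ 2) N - 2 * p * q * sum_f_R0 (fun i => a i * b i) N
  + q ^ 2 * sum_f_R0 (fun i => b i ^ 2) N.
Proof. induction N; [simpl; ring | rewrite !tech5, IHN; ring]. Qed.

Lemma sum_f_R0_Cauchy_Schwarz (a b : nat -> R) N :
  sum_f_R0 (fun i => a i * b i) N ^ 2 <=
  sum_f_R0 (fun i => a i ^ 2) N * sum_f_R0 (fun i => b i ^ 2) N.
Proof.
  set (A := sum_f_R0 (fun i => a i ^ 2) N). set (B := sum_f_R0 (fun i => b i ^ 2) N).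
  set (C := sum_f_R0 (fun i => a i * b i) N).
  assert (Hq : forall p q, 0 <= p ^ 2 * A - 2 * p * q * C + q ^ 2 * B).
  { intros p q. unfold A, B, C. rewrite <- sum_f_R0_sqr_comb.
    apply cond_pos_sum. intro; apply pow2_ge_0. }
  assert (HA : 0 <= A) by (apply cond_pos_sum; intro; apply pow2_ge_0).
  assert (HB : 0 <= B) by (apply cond_pos_sum; intro; apply pow2_ge_0).
  pose proof (Hq C A). pose proof (Hq B C). pose proof (Hq 1 1). pose proof (Hq 1 (-1)).
  destruct (Rle_lt_dec A 0); [|nra]. destruct (Rle_lt_dec B 0); nra.
Qed.

Section L2Norm.
Context (k : scalar_field).
Let sq (z : ell2 k) (N : nat) : R := sum_f_R0 (fun i => Kabs (lval z i) ^ 2) N.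

Lemma l2_norm_sqr (z : ell2 k) : norm z ^ 2 = sup_partial_sums _ (lprop z).
Proof.
  change (norm z) with (l2_norm k z). unfold l2_norm. apply pow2_sqrt.
  apply sup_partial_sums_nonneg. intro; apply pow2_ge_0.
Qed.
Lemma l2_norm_nonneg (z : ell2 k) : 0 <= norm z.
Proof. apply sqrt_pos. Qed.
Lemma l2_partial_sum_le (z : ell2 k) N : sq z N <= norm z ^ 2.
Proof. rewrite l2_norm_sqr. apply sup_partial_sums_ub. Qed.
Lemma l2_partial_sums_cv (z : ell2 k) : Un_cv (sq z) (norm z ^ 2).
Proof. rewrite l2_norm_sqr. apply sup_partial_sums_cv. intro; apply pow2_ge_0. Qed.
Lemma l2_norm_le (z : ell2 k) c : 0 <= c -> (forall N, sq z N <= c ^ 2) -> norm z <= c.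
Proof.
  intros Hc HN. change (norm z) with (l2_norm k z). unfold l2_norm.
  rewrite <- (sqrt_pow2 c Hc). apply sqrt_le_1_alt, sup_partial_sums_least. auto.
Qed.
Lemma l2_coord_le (z : ell2 k) i : Kabs (lval z i) <= norm z.
Proof.
  pose proof (l2_partial_sum_le z i).
  pose proof (term_le_sum_f_R0 (fun i => Kabs (lval z i) ^ 2) i ltac:(intro; apply pow2_ge_0)).
  apply Rsqr_incr_0_var; [|apply l2_norm_nonneg]. unfold sq, Rsqr in *. simpl in *. lra.
Qed.

Lemma l2_norm_triang (x y : ell2 k) : norm (vadd x y) <= norm x + norm y.
Proof.
  pose proof (l2_norm_nonneg x). pose proof (l2_norm_nonneg y).
  apply l2_norm_le; [lra|]. intro N.
  set (a := fun n => Kabs (lval x n)). set (b := fun n => Kabs (lval y n)).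
  apply Rle_trans with (sum_f_R0 (fun i => (1 * a i - (-1) * b i) ^ 2) N).
  { apply sum_Rle. intros n _. unfold a, b. simpl.
    pose proof (Kabs_triang _ (lval x n) (lval y n)). pose proof (Kabs_pos _ (lval x n)).
    pose proof (Kabs_pos _ (lval y n)). pose proof (Kabs_pos _ (Kadd (lval x n) (lval y n))). nra. }
  rewrite sum_f_R0_sqr_comb.
  pose proof (sum_f_R0_Cauchy_Schwarz a b N) as CS.
  pose proof (l2_partial_sum_le x N) as Hx. pose proof (l2_partial_sum_le y N) as Hy.
  set (A := sum_f_R0 (fun i => a i ^ 2) N) in *. set (B := sum_f_R0 (fun i => b i ^ 2) N) in *.
  set (C := sum_f_R0 (fun i => a i * b i) N) in *.
  change (A <= norm x ^ 2) in Hx. change (B <= norm y ^ 2) in Hy.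
  assert (0 <= A) by (apply cond_pos_sum; intro; apply pow2_ge_0).
  assert (0 <= B) by (apply cond_pos_sum; intro; apply pow2_ge_0).
  assert (C <= norm x * norm y).
  { apply Rsqr_incr_0_var; [|nra]. rewrite !Rsqr_pow2, Rpow_mult_distr.
    apply Rle_trans with (A * B); [exact CS | apply Rmult_le_compat; lra]. }
  nra.
Qed.

Lemma ell2_normed : is_normed (ell2 k).
Proof.
  constructor; try (intros; apply lseq_ext; intro n; simpl; K_ring).
  - intros x Hx. apply lseq_ext. intro n. simpl. apply Kabs_eq0.
    simpl in Hx. unfold l2_norm in Hx. apply sqrt_eq_0 in Hx.
    2: apply sup_partial_sums_nonneg; intro; apply pow2_ge_0.
    pose proof (sup_partial_sums_eq0 (fun n => Kabs (lval x n) ^ 2) (lprop x)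
      ltac:(intro; apply pow2_ge_0) Hx n).
    simpl in H. pose proof (Kabs_pos _ (lval x n)). nra.
  - intros a x. simpl. unfold l2_norm.
    rewrite (sup_partial_sums_scale (fun n => Kabs (lval x n) ^ 2) _ (lprop x) _ (Kabs a ^ 2));
      [| apply pow2_ge_0 | intro; apply pow2_ge_0 | intro n; simpl; rewrite Kabs_mul; ring].
    rewrite sqrt_mult, sqrt_pow2 by (apply Kabs_pos || apply pow2_ge_0 ||
      (apply sup_partial_sums_nonneg; intro; apply pow2_ge_0)). reflexivity.
  - apply l2_norm_triang.
Qed.

Lemma l2_parallelogram (x y : ell2 k) :
  norm (vadd x y) ^ 2 + norm (vsub x y) ^ 2 <= 2 * norm x ^ 2 + 2 * norm y ^ 2.
Proof.
  apply (Un_cv_le (fun N => sq (vadd x y) N + sq (vsub x y) N) _ _ 0).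
  { apply CV_plus; apply l2_partial_sums_cv. }
  intros N _. unfold sq. rewrite <- plus_sum.
  rewrite (sum_eq _ (fun n => Kabs (lval x n) ^ 2 * 2 + Kabs (lval y n) ^ 2 * 2)).
  - rewrite plus_sum, <- !scal_sum.
    pose proof (l2_partial_sum_le x N). pose proof (l2_partial_sum_le y N). unfold sq in *. lra.
  - intros i _. unfold vsub. cbn [lval vadd vopp ell2 l2_add l2_opp].
    rewrite !Kabs_sqr, !Kre_add, !Kim_add, !Kre_opp, !Kim_opp. ring.
Qed.
End L2Norm.

Lemma ell2_uniformly_convex k : uniformly_convex (ell2 k).
Proof.
  intros eps He. set (e := Rmin eps 2).
  assert (He1 : 0 < e) by (apply Rmin_pos; lra).
  assert (He2 : e <= 2) by apply Rmin_r. assert (He3 : e <= eps) by apply Rmin_l.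
  exists (1 - sqrt (1 - e ^ 2 / 4)). split.
  { enough (sqrt (1 - e ^ 2 / 4) < 1) by lra. rewrite <- sqrt_1 at 2.
    apply sqrt_lt_1_alt. nra. }
  intros x y Hx Hy Hxy. unfold in_sphere in Hx, Hy.
  change (norm (midpoint x y) <= 1 - (1 - sqrt (1 - e ^ 2 / 4))).
  unfold midpoint. rewrite (norm_rscal (ell2_normed k)), Rabs_right by lra.
  pose proof (l2_parallelogram k x y). rewrite Hx, Hy in H.
  assert (e ^ 2 <= norm (vsub x y) ^ 2) by (apply pow_incr; lra).
  pose proof (l2_norm_nonneg k (vadd x y)).
  replace (1 - (1 - sqrt (1 - e ^ 2 / 4))) with (sqrt (1 - e ^ 2 / 4)) by ring.
  rewrite <- (sqrt_pow2 (/ 2 * norm (vadd x y))) by lra.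
  apply sqrt_le_1_alt. simpl in *. lra.
Qed.

(* Fatou's lemma for the partial sums. *)
Lemma l2_coordinatewise_limit_le k (u : nat -> ell2 k) (L w : nat -> K k) c N0 :
  (forall i, Kcv (fun m => lval (u m) i) (L i)) ->
  (forall m, (m >= N0)%nat -> forall N,
     sum_f_R0 (fun i => Kabs (Kadd (lval (u m) i) (Kopp (w i))) ^ 2) N <= c) ->
  forall N, sum_f_R0 (fun i => Kabs (Kadd (L i) (Kopp (w i))) ^ 2) N <= c.
Proof.
  intros Hc Hb N.
  apply (Un_cv_le (fun m => sum_f_R0 (fun i => Kabs (Kadd (lval (u m) i) (Kopp (w i))) ^ 2) N)
    _ _ N0); [|intros m Hm; apply Hb; auto].
  assert (Hsq : forall i, Un_cv (fun m => Kabs (Kadd (lval (u m) i) (Kopp (w i))) ^ 2)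
                                (Kabs (Kadd (L i) (Kopp (w i))) ^ 2)).
  { intro i. pose proof (Kcv_abs_sub k _ _ (w i) (Hc i)) as H.
    rewrite <- Rsqr_pow2. eapply Un_cv_ext; [|apply (CV_mult _ _ _ _ H H)].
    intro m. apply Rsqr_pow2. }
  induction N as [|N IH]; cbn [sum_f_R0]; [apply Hsq | apply CV_plus; auto].
Qed.

Lemma ell2_complete k : is_complete (ell2 k).
Proof.
  intros u Hu. pose proof (ell2_normed k) as HN.
  assert (Hcoord : forall i, exists l, Kcv (fun m => lval (u m) i) l).
  { intro i. apply K_complete. intros eps He. destruct (Hu eps He) as [N HN']. exists N.
    intros m n Hm Hn. eapply Rle_lt_trans; [apply (l2_coord_le k (vsub (u m) (u n)) i)|].
    auto. }
  destruct (choice _ Hcoord) as [L HL].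
  destruct (Hu 1) as [N0 HN0]; [lra|].
  assert (HL2 : l2_pred L).
  { exists ((norm (u N0) + 1) ^ 2). intro N.
    rewrite (sum_eq _ (fun i => Kabs (Kadd (L i) (Kopp K0)) ^ 2))
      by (intros; rewrite Kadd_opp0; auto).
    apply (l2_coordinatewise_limit_le k u L (fun _ => K0) _ N0 HL). intros m Hm M.
    rewrite (sum_eq _ (fun i => Kabs (lval (u m) i) ^ 2)) by (intros; rewrite Kadd_opp0; auto).
    pose proof (HN0 m N0 Hm (le_n _)). pose proof (norm_rev_triang HN (u m) (u N0)).
    apply Rabs_le_inv in H0. pose proof (l2_partial_sum_le k (u m) M).
    pose proof (norm_nonneg HN (u m)).
    eapply Rle_trans; [apply H1|]. apply pow_incr. lra. }
  exists {| lval := L; lprop := HL2 |}. intros eps He.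
  destruct (Hu (eps / 2)) as [N HN']; [lra|]. exists N. intros m Hm.
  enough (norm (vsub (u m) {| lval := L; lprop := HL2 |}) <= eps / 2) by lra.
  apply l2_norm_le; [lra|]. intro M.
  rewrite (sum_eq _ (fun i => Kabs (Kadd (L i) (Kopp (lval (u m) i))) ^ 2))
    by (intros i _; simpl; rewrite Kabs_sub_sym; reflexivity).
  apply (l2_coordinatewise_limit_le k u L _ _ N HL). intros n Hn M'.
  pose proof (l2_partial_sum_le k (vsub (u n) (u m)) M'). pose proof (HN' n m Hn Hm).
  pose proof (norm_nonneg HN (vsub (u n) (u m))).
  eapply Rle_trans; [apply H|]. apply pow_incr. lra.
Qed.

(** * The Schur property of l1 *)

(* [psum a n] has the [n] terms [a 0], ..., [a (n - 1)], one fewer than [sum_f_R0 a n]. *)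
Fixpoint psum (a : nat -> R) (n : nat) : R :=
  match n with O => 0 | S n => psum a n + a n end.
Fixpoint Kpsum {k} (c : nat -> K k) (n : nat) : K k :=
  match n with O => K0 | S n => Kadd (Kpsum c n) (c n) end.

Lemma psum_succ (a : nat -> R) N : psum a (S N) = sum_f_R0 a N.
Proof. induction N; simpl in *; [|rewrite IHN]; ring. Qed.
Lemma psum_incr (a : nat -> R) n m : (forall i, 0 <= a i) -> (n <= m)%nat -> psum a n <= psum a m.
Proof. intros Ha H. induction H; [lra|]. simpl. pose proof (Ha m). lra. Qed.
Lemma psum_opp (a : nat -> R) n : psum (fun i => - a i) n = - psum a n.
Proof. induction n; simpl; [|rewrite IHn]; ring. Qed.
Lemma psum_range_le (a b : nat -> R) p q : (p <= q)%nat ->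
  (forall i, (p <= i < q)%nat -> a i <= b i) -> psum a q - psum a p <= psum b q - psum b p.
Proof.
  intro H. induction H; intro Hab; [lra|]. simpl.
  assert (a m <= b m) by (apply Hab; lia).
  assert (psum a m - psum a p <= psum b m - psum b p) by (apply IHle; intros; apply Hab; lia).
  lra.
Qed.

Lemma Kpsum_abs_diff k (c : nat -> K k) n m : (n <= m)%nat ->
  Kabs (Kadd (Kpsum c m) (Kopp (Kpsum c n))) <=
  psum (fun i => Kabs (c i)) m - psum (fun i => Kabs (c i)) n.
Proof.
  intro H. induction H; [rewrite Kadd_opp, Kabs_K0; lra|]. simpl.
  replace (Kadd (Kadd (Kpsum c m) (c m)) (Kopp (Kpsum c n)))
    with (Kadd (Kadd (Kpsum c m) (Kopp (Kpsum c n))) (c m)) by K_ring.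
  pose proof (Kabs_triang _ (Kadd (Kpsum c m) (Kopp (Kpsum c n))) (c m)). lra.
Qed.
Lemma Kpsum_abs k (c : nat -> K k) n : Kabs (Kpsum c n) <= psum (fun i => Kabs (c i)) n.
Proof.
  induction n; simpl; [rewrite Kabs_K0; lra|].
  pose proof (Kabs_triang _ (Kpsum c n) (c n)). lra.
Qed.
Lemma Kpsum_re k (c : nat -> K k) n : Kre (Kpsum c n) = psum (fun i => Kre (c i)) n.
Proof. induction n; simpl; [destruct k; reflexivity | rewrite Kre_add, IHn; reflexivity]. Qed.

Lemma Kpsum_cv_of_abs_bounded k (c : nat -> K k) B :
  (forall n, psum (fun i => Kabs (c i)) n <= B) -> exists l, Kcv (Kpsum c) l.
Proof.
  intro HB. apply K_complete. intros eps He.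
  assert (Hpos : forall i, 0 <= Kabs (c i)) by (intro; apply Kabs_pos).
  destruct (sup_approx (fun x => exists n, x = psum (fun i => Kabs (c i)) n) B)
    as (s & Hs & _ & Happ).
  { exists 0, O. reflexivity. } { intros x (n & ->). auto. }
  destruct (Happ eps He) as (x & (N & ->) & HN). exists N.
  assert (Hdiff : forall m n, (N <= n <= m)%nat ->
            Kabs (Kadd (Kpsum c m) (Kopp (Kpsum c n))) < eps).
  { intros m n Hmn. pose proof (Kpsum_abs_diff k c n m ltac:(lia)).
    pose proof (psum_incr _ N n Hpos ltac:(lia)).
    assert (psum (fun i => Kabs (c i)) m <= s) by (apply Hs; eauto). lra. }
  intros m n Hm Hn. destruct (Nat.le_ge_cases n m).
  - apply Hdiff. lia.
  - rewrite Kabs_sub_sym. apply Hdiff. lia.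
Qed.

Lemma l1_psum_le k (z : ell1 k) n : psum (fun i => Kabs (lval z i)) n <= norm z.
Proof.
  destruct n; [apply (norm_nonneg (ell1_normed k))|].
  rewrite psum_succ. apply (sup_partial_sums_ub _ (lprop z)).
Qed.

Lemma l1_psum_tail k (z : ell1 k) eps : eps > 0 ->
  exists B, forall B', (B' >= B)%nat -> norm z - psum (fun i => Kabs (lval z i)) B' < eps.
Proof.
  intro He. destruct (sup_partial_sums_approx _ (lprop z) eps He) as [N HN]. exists (S N).
  intros B' HB'.
  pose proof (psum_incr (fun i => Kabs (lval z i)) (S N) B' ltac:(intro; apply Kabs_pos) HB').
  rewrite psum_succ in H. change (norm z) with (l1_norm k z). unfold l1_norm. lra.
Qed.

Lemma coordinate_functional k (i : nat) : is_bounded_functional (fun v : ell1 k => lval v i).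
Proof.
  split; [|split]; [reflexivity | reflexivity |].
  exists 1. intro x. rewrite Rmult_1_l. pose proof (l1_psum_le k x (S i)). cbn [psum] in H.
  pose proof (psum_incr (fun i => Kabs (lval x i)) 0 i ltac:(intro; apply Kabs_pos) ltac:(lia)).
  cbn [psum] in H0. lra.
Qed.

Lemma Kpsum_mul_add k (sg c d : nat -> K k) n :
  Kpsum (fun i => Kmul (sg i) (Kadd (c i) (d i))) n =
  Kadd (Kpsum (fun i => Kmul (sg i) (c i)) n) (Kpsum (fun i => Kmul (sg i) (d i)) n).
Proof. induction n; simpl; [|rewrite IHn]; K_ring. Qed.
Lemma Kpsum_mul_scal k (sg c : nat -> K k) a n :
  Kpsum (fun i => Kmul (sg i) (Kmul a (c i))) n = Kmul a (Kpsum (fun i => Kmul (sg i) (c i)) n).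
Proof. induction n; simpl; [|rewrite IHn]; K_ring. Qed.

Lemma l1_pairing_functional k (sg : nat -> K k) : (forall i, Kabs (sg i) <= 1) ->
  exists f : ell1 k -> K k, is_bounded_functional f /\
    forall v, Kcv (Kpsum (fun i => Kmul (sg i) (lval v i))) (f v).
Proof.
  intro Hsg.
  assert (Habs : forall (v : ell1 k) n,
            psum (fun i => Kabs (Kmul (sg i) (lval v i))) n <= norm v).
  { intros v n. eapply Rle_trans; [|apply l1_psum_le].
    pose proof (psum_range_le (fun i => Kabs (Kmul (sg i) (lval v i)))
      (fun i => Kabs (lval v i)) 0 n
      ltac:(lia)). simpl in H. rewrite !Rminus_0_r in H. apply H.
    intros i _. rewrite Kabs_mul. pose proof (Kabs_pos _ (lval v i)). pose proof (Hsg i).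
    pose proof (Kabs_pos _ (sg i)). nra. }
  destruct (choice _ (fun v => Kpsum_cv_of_abs_bounded k _ (norm v) (Habs v))) as [f Hf].
  exists f. split; auto. split; [|split].
  - intros x y. apply (Kcv_unique k (Kpsum (fun i => Kmul (sg i) (lval (vadd x y) i)))); auto.
    apply (Kcv_ext k _ _ _ (fun m => eq_sym (Kpsum_mul_add k sg (lval x) (lval y) m))).
    apply Kcv_add; auto.
  - intros a x. apply (Kcv_unique k (Kpsum (fun i => Kmul (sg i) (lval (vscal a x) i)))); auto.
    apply (Kcv_ext k _ _ _ (fun m => eq_sym (Kpsum_mul_scal k sg (lval x) a m))).
    apply Kcv_mul; auto.
  - exists 1. intro v. rewrite Rmult_1_l. apply (Kcv_abs_le k _ _ _ (Hf v)).
    intro m. eapply Rle_trans; [apply Kpsum_abs | apply Habs].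
Qed.

Lemma l1_weakly_null_head k (w : nat -> ell1 k) :
  (forall f, is_bounded_functional f -> Un_cv (fun n => Kabs (f (w n))) 0) ->
  forall B e, e > 0 -> exists N, forall n, (n >= N)%nat ->
    psum (fun i => Kabs (lval (w n) i)) B < e.
Proof.
  intros Hw B. induction B as [|B IH]; intros e He; [exists O; intros; simpl; lra|].
  destruct (IH (e / 2)) as [N1 H1]; [lra|].
  destruct (Un_cv_0_abs _ (Hw _ (coordinate_functional k B)) (e / 2)) as [N2 H2]; [lra|].
  exists (max N1 N2). intros n Hn. specialize (H1 n ltac:(lia)). specialize (H2 n ltac:(lia)).
  rewrite Rabs_right in H2 by (apply Rle_ge, Kabs_pos). cbn [psum]. lra.
Qed.

Lemma gliding_hump_blocks k (w : nat -> ell1 k) eps : eps > 0 ->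
  (forall B e, e > 0 -> exists N, forall n, (n >= N)%nat ->
     psum (fun i => Kabs (lval (w n) i)) B < e) ->
  infinite_set (fun n => eps <= norm (w n)) ->
  exists Bj nj : nat -> nat, Bj O = O /\ (forall j, (Bj j < Bj (S j))%nat) /\
    (forall j, (nj j >= j)%nat) /\
    forall j, eps <= norm (w (nj j)) /\ psum (fun i => Kabs (lval (w (nj j)) i)) (Bj j) < eps / 5 /\
      norm (w (nj j)) - psum (fun i => Kabs (lval (w (nj j)) i)) (Bj (S j)) < eps / 5.
Proof.
  intros He Hhead Hinf.
  assert (Hstep : forall st : nat * nat, exists st' : nat * nat,
     (snd st' > snd st)%nat /\ (fst st' > fst st)%nat /\ eps <= norm (w (snd st')) /\
     psum (fun i => Kabs (lval (w (snd st')) i)) (fst st) < eps / 5 /\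
     norm (w (snd st')) - psum (fun i => Kabs (lval (w (snd st')) i)) (fst st') < eps / 5).
  { intros [B n0]. destruct (Hhead B (eps / 5)) as [N1 H1]; [lra|].
    destruct (Hinf (max N1 (S n0))) as (n & Hn & Hnn).
    destruct (l1_psum_tail k (w n) (eps / 5)) as [B' HB']; [lra|].
    exists (max B' (S B), n). simpl. repeat split; auto; try lia. apply H1; lia. apply HB'; lia. }
  destruct (choice _ Hstep) as [F HF].
  set (st := nat_rect (fun _ => (nat * nat)%type) (O, O) (fun _ s => F s)).
  assert (Hst : forall j, st (S j) = F (st j)) by reflexivity.
  exists (fun j => fst (st j)), (fun j => snd (st (S j))). split; [reflexivity|].
  assert (Hsnd : forall j, (snd (st j) >= j)%nat).
  { induction j; [lia|]. rewrite Hst. pose proof (proj1 (HF (st j))). lia. }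
  split; [|split]; intro j; rewrite Hst;
    [apply HF | pose proof (Hsnd j); pose proof (proj1 (HF (st j))); lia |].
  destruct (HF (st j)) as (_ & _ & H1 & H2 & H3). auto.
Qed.

Lemma block_index (Bj : nat -> nat) : Bj O = O -> (forall j, (Bj j < Bj (S j))%nat) ->
  exists blk : nat -> nat, forall i j, (Bj j <= i < Bj (S j))%nat -> blk i = j.
Proof.
  intros B0 HB.
  assert (Hex : forall i, exists j, (Bj j <= i < Bj (S j))%nat).
  { induction i as [|i [j Hj]]; [exists O; pose proof (HB O); lia|].
    destruct (Nat.eq_dec (S i) (Bj (S j))) as [E|E].
    - exists (S j). pose proof (HB (S j)). lia.
    - exists j. lia. }
  destruct (choice _ Hex) as [blk Hblk]. exists blk. intros i j Hj.
  specialize (Hblk i).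
  assert (Hle : forall a b, (a < b)%nat -> (Bj (S a) <= Bj b)%nat).
  { intros a b Hab. destruct (Nat.eq_dec (S a) b) as [<-|Hne]; [lia|].
    pose proof (increasing_lt Bj HB (S a) b ltac:(lia)). lia. }
  destruct (Nat.lt_trichotomy (blk i) j) as [Hlt | [Heq | Hlt]]; auto;
    pose proof (Hle _ _ Hlt); lia.
Qed.

Lemma l1_block_pairing_ge k (v : ell1 k) (sg : nat -> K k) p q M :
  (forall i, Kabs (sg i) <= 1) -> (p <= q <= M)%nat ->
  (forall i, (p <= i < q)%nat -> Kre (Kmul (sg i) (lval v i)) = Kabs (lval v i)) ->
  2 * psum (fun i => Kabs (lval v i)) q - 2 * psum (fun i => Kabs (lval v i)) p - norm v <=
  psum (fun i => Kre (Kmul (sg i) (lval v i))) M.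
Proof.
  intros Hsg Hpq Hblock.
  set (r := fun i => Kre (Kmul (sg i) (lval v i))). set (a := fun i => Kabs (lval v i)).
  assert (Hr : forall i, - a i <= r i).
  { intro i. pose proof (Kre_mul_le _ (sg i) (Kopp (lval v i)) (Hsg i)).
    rewrite Kre_mul_opp, Kabs_opp in H. unfold r, a. lra. }
  pose proof (psum_range_le (fun i => - a i) r 0 p ltac:(lia) ltac:(intros; apply Hr)).
  pose proof (psum_range_le a r p q ltac:(lia)
    ltac:(intros i Hi; unfold a, r; rewrite (Hblock i Hi); lra)).
  pose proof (psum_range_le (fun i => - a i) r q M ltac:(lia) ltac:(intros; apply Hr)).
  rewrite !psum_opp in H, H1. simpl in H.
  pose proof (l1_psum_le k v M). fold a in H2. lra.
Qed.

Lemma ell1_schur k : schur_property (ell1 k).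
Proof.
  intros u l Hw. pose proof (ell1_normed k) as HN.
  set (w := fun n => vsub (u n) l).
  assert (Hwk : forall f, is_bounded_functional f -> Un_cv (fun n => Kabs (f (w n))) 0).
  { intros f Hf. eapply Un_cv_ext; [|apply (Hw f Hf)]. intro n. unfold w.
    rewrite (functional_vsub HN f Hf). reflexivity. }
  change (Un_cv (fun n => norm (w n)) 0).
  apply NNPP. intro Hn. apply not_Un_cv_0 in Hn. destruct Hn as (eps & He & Hinf).
  destruct (gliding_hump_blocks k w eps He (l1_weakly_null_head k w Hwk)) as
    (Bj & nj & B0 & HB & Hnj & Hblocks).
  { intro N. destruct (Hinf N) as (n & Hn & Hnn). exists n. split; auto.
    rewrite Rabs_right in Hnn by (apply Rle_ge, (norm_nonneg HN)). auto. }
  destruct (block_index Bj B0 HB) as [blk Hblk].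
  set (sg := fun i => Kphase (lval (w (nj (blk i))) i)).
  destruct (l1_pairing_functional k sg) as (f & Hf & Hfv); [intro; apply Kphase_spec|].
  assert (Hbig : forall j, eps / 5 <= Kre (f (w (nj j)))).
  { intro j. destruct (Hblocks j) as (Hn1 & Hn2 & Hn3).
    assert (Hblock : forall i, (Bj j <= i < Bj (S j))%nat ->
              Kre (Kmul (sg i) (lval (w (nj j)) i)) = Kabs (lval (w (nj j)) i)).
    { intros i Hi. unfold sg. rewrite (Hblk i j Hi). apply Kphase_spec. }
    apply (Kcv_re_ge k _ _ _ (Bj (S j)) (Hfv _)). intros M HM. rewrite Kpsum_re.
    pose proof (l1_block_pairing_ge k (w (nj j)) sg (Bj j) (Bj (S j)) M
      (fun i => proj1 (Kphase_spec k _)) ltac:(pose proof (HB j); lia) Hblock). lra. }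
  destruct (Un_cv_0_abs _ (Hwk f Hf) (eps / 5)) as [N HN']; [lra|].
  specialize (HN' (nj N) (Hnj N)). rewrite Rabs_right in HN' by (apply Rle_ge, Kabs_pos).
  pose proof (Rabs_Kre_le _ (f (w (nj N)))). pose proof (Rle_abs (Kre (f (w (nj N))))).
  specialize (Hbig N). lra.
Qed.

Theorem mainTheorem3 (k : scalar_field) :
  (forall X Y : NormedData k,
     is_Banach X -> is_Banach Y ->
     uniformly_convex X -> schur_property Y ->
     sBPBp X Y)
  /\ sBPBp (ell2 k) (ell1 k).
Proof.
  split.
  - intros X Y HX HY HU HS.
    apply uniformly_convex_Schur_sBPBp; auto using Banach_normed, Banach_complete.
  - apply uniformly_convex_Schur_sBPBp.
    + apply ell2_normed.
    + apply ell2_complete.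
    + apply ell1_normed.
    + apply ell2_uniformly_convex.
    + apply ell1_schur.
Qed.
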